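(* For every $n\ge 1$, the Baumslag–Solitar group $BS(1,n)=\langle a,t\mid tat^{-1}=a^n\rangle$ has property (PPH).
   Context: An isometric action on a metric space $Z$ is proper if for all $z\in Z$, $r>0$, $\{g: d(z,gz)\le r\}$ is finite. A group $G$ has property (PPH) if there exist unbounded proper Gromov-hyperbolic (geodesic) spaces $X_1,\ldots,X_l$ on which $G$ acts isometrically and cocompactly such that the diagonal action $g(x_1,\ldots,x_l)=(gx_1,\ldots,gx_l)$ on $\prod_{i=1}^lX_i$ with the $\ell^1$-metric is proper. *)

From Stdlib Require Import Reals List.
From mathcomp Require Import all_boot.

Set Implicit Arguments.
Unset Strict Implicit.

Record group := Group {
  gcar :> Type;
  gmul : gcar -> gcar -> gcar;
  ginv : gcar -> gcar;
  gone : gcar;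
  gmulA : forall x y z, gmul x (gmul y z) = gmul (gmul x y) z;
  gmul1l : forall x, gmul gone x = x;
  gmul1r : forall x, gmul x gone = x;
  gmulVl : forall x, gmul (ginv x) x = gone;
  gmulVr : forall x, gmul x (ginv x) = gone
}.
Arguments gmul {g}. Arguments ginv {g}. Arguments gone {g}.

Fixpoint gpow (G : group) (x : G) (n : nat) : G :=
  match n with O => gone | S m => gmul x (gpow x m) end.

Inductive gen_by (G : group) (a t : G) : G -> Prop :=
| gen_a : gen_by a t a
| gen_t : gen_by a t t
| gen_one : gen_by a t gone
| gen_mul x y : gen_by a t x -> gen_by a t y -> gen_by a t (gmul x y)
| gen_inv x : gen_by a t x -> gen_by a t (ginv x).

Definition group_hom (G H : group) (f : G -> H) : Prop :=
  forall x y, f (gmul x y) = gmul (f x) (f y).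

Definition bs_rel (G : group) (n : nat) (a t : G) : Prop :=
  gmul (gmul t a) (ginv t) = gpow a n.

(** G (with the distinguished elements a, t) is presented by
    < a, t | t a t^{-1} = a^n >: generated by a, t, the relation holds,
    and every pair satisfying the relation in any group is the image of
    (a, t) under a homomorphism. *)
Definition is_BS1n (G : group) (n : nat) (a t : G) : Prop :=
  bs_rel n a t /\ (forall g : G, gen_by a t g) /\
  (forall (H : group) (b u : H), bs_rel n b u ->
     exists f : G -> H, group_hom f /\ f a = b /\ f t = u).

Local Open Scope R_scope.

Definition is_metric {X : Type} (d : X -> X -> R) : Prop :=
  (forall x y, d x y = 0 <-> x = y) /\ (forall x y, d x y = d y x) /\
  (forall x y z, d x z <= d x y + d y z).

Definition geodesic_space {X : Type} (d : X -> X -> R) : Prop :=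
  forall x y, exists gam : R -> X, gam 0 = x /\ gam (d x y) = y /\
    forall s u, 0 <= s <= d x y -> 0 <= u <= d x y ->
      d (gam s) (gam u) = Rabs (s - u).

Definition gromov_product {X : Type} (d : X -> X -> R) (w x y : X) : R :=
  (d x w + d y w - d x y) / 2.

Definition gromov_hyperbolic {X : Type} (d : X -> X -> R) : Prop :=
  exists delta, 0 <= delta /\ forall w x y z,
    gromov_product d w x z >=
      Rmin (gromov_product d w x y) (gromov_product d w y z) - delta.

Definition seq_cv {X : Type} (d : X -> X -> R) (u : nat -> X) (L : X) : Prop :=
  forall eps, 0 < eps -> exists N, forall k, (N <= k)%nat -> d (u k) L < eps.

(** compactness (sequential, equivalent for metric spaces) *)
Definition compact_set {X : Type} (d : X -> X -> R) (K : X -> Prop) : Prop :=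
  forall u : nat -> X, (forall k, K (u k)) ->
    exists phi : nat -> nat, (forall k, (phi k < phi (S k))%nat) /\
      exists L, K L /\ seq_cv d (fun k => u (phi k)) L.

Definition proper_space {X : Type} (d : X -> X -> R) : Prop :=
  forall x r, compact_set d (fun y => d x y <= r).

Definition unbounded {X : Type} (d : X -> X -> R) : Prop :=
  forall r, exists x y, r < d x y.

Definition isometric_action (G : group) {X : Type} (d : X -> X -> R)
  (act : G -> X -> X) : Prop :=
  (forall x, act gone x = x) /\
  (forall g h x, act (gmul g h) x = act g (act h x)) /\
  (forall g x y, d (act g x) (act g y) = d x y).

Definition cocompact_action (G : group) {X : Type} (d : X -> X -> R)
  (act : G -> X -> X) : Prop :=
  exists K : X -> Prop, compact_set d K /\
    forall x, exists g y, K y /\ act g y = x.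

Definition PPH (G : group) : Prop :=
  exists l : nat, (0 < l)%nat /\
  exists (X : 'I_l -> Type) (d : forall i, X i -> X i -> R)
         (act : forall i, G -> X i -> X i),
    (forall i, is_metric (d i) /\ geodesic_space (d i) /\ proper_space (d i) /\
       gromov_hyperbolic (d i) /\ unbounded (d i) /\
       isometric_action (d i) (act i) /\ cocompact_action (d i) (act i)) /\
    (* the diagonal action on the l^1-product is proper *)
    (forall (z : forall i, X i) (r : R), exists s : list G, forall g : G,
       \big[Rplus/0]_(i < l) d i (z i) (act i g (z i)) <= r -> In g s).

From Pilot Require Import Defs.
From Stdlib Require Import Reals Lra Lia ZArith List Classical ClassicalEpsilon Rtopology Wf_nat.
From mathcomp Require Import all_boot zify.

Open Scope R_scope.


Definition is_int (y : R) : Prop := exists m : Z, y = IZR m.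

Lemma is_int_IZR m : is_int (IZR m).
Proof. by exists m. Qed.

Lemma is_int_add x y : is_int x -> is_int y -> is_int (x + y).
Proof. by move=> [m ->] [k ->]; exists (m + k)%Z; rewrite plus_IZR. Qed.

Lemma is_int_opp x : is_int x -> is_int (- x).
Proof. by move=> [m ->]; exists (- m)%Z; rewrite opp_IZR. Qed.

Lemma is_int_sub x y : is_int x -> is_int y -> is_int (x - y).
Proof. by move=> ? ?; apply: is_int_add => //; apply: is_int_opp. Qed.

Lemma is_int_mul x y : is_int x -> is_int y -> is_int (x * y).
Proof. by move=> [m ->] [k ->]; exists (m * k)%Z; rewrite mult_IZR. Qed.

Lemma is_int_INR k : is_int (INR k).
Proof. by exists (Z.of_nat k); apply: INR_IZR_INZ. Qed.

Lemma Int_part_bounds y : IZR (Int_part y) <= y < IZR (Int_part y) + 1.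
Proof. by have := base_Int_part y; lra. Qed.

Lemma Int_part_addZ y m : Int_part (y + IZR m) = (Int_part y + m)%Z.
Proof.
by symmetry; apply: Int_part_spec; rewrite plus_IZR; have := Int_part_bounds y; lra.
Qed.

Lemma Int_part_IZR m : Int_part (IZR m) = m.
Proof. by symmetry; apply: Int_part_spec; lra. Qed.

Lemma Int_part_subZ y m : Int_part (y - IZR m) = (Int_part y - m)%Z.
Proof. by rewrite /Rminus -opp_IZR Int_part_addZ. Qed.

Lemma Int_part_le {y z} : y <= z -> (Int_part y <= Int_part z)%Z.
Proof.
move=> yz; have := Int_part_bounds y; have := Int_part_bounds z.
case: (Z.le_gt_cases (Int_part y) (Int_part z)) => // /Zlt_le_succ /IZR_le.
by rewrite succ_IZR; lra.
Qed.

Lemma Int_part_ge m y : IZR m <= y -> (m <= Int_part y)%Z.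
Proof. by move/Int_part_le; rewrite Int_part_IZR. Qed.

Lemma frac_part_bounds y : 0 <= frac_part y < 1.
Proof. by have := base_fp y; lra. Qed.

Lemma frac_part_eq x y : frac_part x = frac_part y <-> is_int (x - y).
Proof.
rewrite /frac_part; split=> [E | [m E]].
  by exists (Int_part x - Int_part y)%Z; rewrite minus_IZR; lra.
have -> : x = y + IZR m by lra.
by rewrite Int_part_addZ plus_IZR; lra.
Qed.

Lemma frac_part_small y : 0 <= y < 1 -> frac_part y = y.
Proof. by move=> y01; rewrite /frac_part -(Int_part_spec y 0) //; lra. Qed.

Lemma frac_part_int y : is_int y -> frac_part y = 0.
Proof.
move=> yZ; rewrite -fp_R0; apply/frac_part_eq.
by rewrite Rminus_0_r.
Qed.

Lemma frac_part_idem y : frac_part (frac_part y) = frac_part y.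
Proof.
by apply/frac_part_eq; rewrite /frac_part; exists (- Int_part y)%Z; rewrite opp_IZR; ring.
Qed.

Lemma frac_part_addl x y : frac_part (frac_part x + y) = frac_part (x + y).
Proof.
by apply/frac_part_eq; rewrite /frac_part; exists (- Int_part x)%Z; rewrite opp_IZR; ring.
Qed.

Lemma frac_part_mul_int m y : is_int m -> frac_part (m * frac_part y) = frac_part (m * y).
Proof.
move=> mZ; apply/frac_part_eq; rewrite /frac_part.
have -> : m * (y - IZR (Int_part y)) - m * y = - (m * IZR (Int_part y)) by ring.
by apply/is_int_opp/is_int_mul => //; apply: is_int_IZR.
Qed.

Lemma Rabs_le_between {x y e} : Rabs (x - y) <= e -> y - e <= x <= y + e.
Proof. by have := Rle_abs (x - y); have := Rle_abs (y - x); rewrite Rabs_minus_sym; lra. Qed.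


Definition powZ (n : nat) (k : Z) : R := powerRZ (INR n) k.

Lemma powZ0 n : powZ n 0 = 1.
Proof. by []. Qed.

Lemma powZ_one k : powZ 1 k = 1.
Proof. by rewrite /powZ /= powerRZ_R1. Qed.

Lemma INR_expn n e : INR (n ^ e) = INR n ^ e.
Proof. by elim: e => [|e IHe] //; rewrite expnS mult_INR IHe. Qed.

Lemma powZ_nat n (e : nat) : powZ n (Z.of_nat e) = INR n ^ e.
Proof. by rewrite /powZ -pow_powerRZ. Qed.

Lemma is_int_powZ n k : (0 <= k)%Z -> is_int (powZ n k).
Proof. by move=> k0; rewrite -(Z2Nat.id k k0) powZ_nat -pow_INR; apply: is_int_INR. Qed.

Definition nadic (n : nat) (y : R) : Prop := exists e : nat, is_int (y * INR n ^ e).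

Lemma nadic_IZR n m : nadic n (IZR m).
Proof. by exists 0%N; rewrite Rmult_1_r; apply: is_int_IZR. Qed.

Lemma nadic_add {n x y} : nadic n x -> nadic n y -> nadic n (x + y).
Proof.
move=> [e1 H1] [e2 H2]; exists (e1 + e2)%N; rewrite pow_add.
have -> : (x + y) * (INR n ^ e1 * INR n ^ e2) =
          x * INR n ^ e1 * INR n ^ e2 + y * INR n ^ e2 * INR n ^ e1 by ring.
by apply: is_int_add; apply: is_int_mul => //; rewrite -pow_INR; apply: is_int_INR.
Qed.

Lemma nadic_opp {n x} : nadic n x -> nadic n (- x).
Proof. by move=> [e H]; exists e; rewrite Ropp_mult_distr_l_reverse; apply: is_int_opp. Qed.

Lemma nadic_frac_part {n x} : nadic n x -> nadic n (frac_part x).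
Proof.
move=> [e H]; exists e; rewrite /frac_part Rmult_minus_distr_r.
by apply: is_int_sub => //; apply: is_int_mul; [apply: is_int_IZR | rewrite -pow_INR; apply: is_int_INR].
Qed.

Section Powers.

Context {n : nat}.
Hypothesis n_gt0 : (0 < n)%N.

Lemma INR_n_gt0 : 0 < INR n.
Proof. by apply: lt_0_INR; lia. Qed.

Lemma powZ_gt0 k : 0 < powZ n k.
Proof. by apply/powerRZ_lt/INR_n_gt0. Qed.

Lemma powZ_add k1 k2 : powZ n (k1 + k2) = powZ n k1 * powZ n k2.
Proof. by apply: powerRZ_add; have := INR_n_gt0; lra. Qed.

Lemma powZ_oppK k : powZ n (- k) * powZ n k = 1.
Proof. by rewrite -powZ_add Z.add_opp_diag_l. Qed.

Lemma powZ_cancel k y : powZ n (- k) * (y * powZ n k) = y.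
Proof. by rewrite Rmult_comm Rmult_assoc (Rmult_comm (powZ n k)) powZ_oppK Rmult_1_r. Qed.

Lemma powZ_ge1 k : (0 <= k)%Z -> 1 <= powZ n k.
Proof.
move=> k0; rewrite -(Z2Nat.id k k0) powZ_nat; apply: pow_R1_Rle.
by apply: (le_INR 1); lia.
Qed.

Lemma powZ_le k1 k2 : (k1 <= k2)%Z -> powZ n k1 <= powZ n k2.
Proof.
move=> k12; have -> : k2 = (k1 + (k2 - k1))%Z by lia.
rewrite powZ_add; have := powZ_ge1 (k2 - k1) ltac:(lia); have := powZ_gt0 k1; nra.
Qed.

Lemma ln_powZ k : ln (powZ n k) = IZR k * ln (INR n).
Proof.
have n0 := INR_n_gt0.
case: k => [|p|p]; rewrite /powZ /=; first by rewrite ln_1; ring.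
  by rewrite ln_pow // INR_IZR_INZ positive_nat_Z.
rewrite ln_Rinv; last by apply: pow_lt.
by rewrite ln_pow // INR_IZR_INZ positive_nat_Z -Pos2Z.opp_pos opp_IZR; ring.
Qed.

Lemma nadic_scale k {x} : nadic n x -> nadic n (powZ n k * x).
Proof.
move=> [e H]; exists (e + Z.abs_nat k)%N.
rewrite -powZ_nat Nat2Z.inj_add powZ_add powZ_nat.
have -> : powZ n k * x * (INR n ^ e * powZ n (Z.of_nat (Z.abs_nat k))) =
          x * INR n ^ e * powZ n (k + Z.of_nat (Z.abs_nat k)) by rewrite powZ_add; ring.
by apply: is_int_mul => //; apply: is_int_powZ; lia.
Qed.

End Powers.


Definition path_concat {X : Type} (g1 g2 : R -> X) (c : R) : R -> X :=
  fun s => if Rle_dec s c then g1 s else g2 s.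

Lemma path_concat_l {X : Type} (g1 g2 : R -> X) c s : s <= c -> path_concat g1 g2 c s = g1 s.
Proof. by rewrite /path_concat; case: Rle_dec. Qed.

Lemma path_concat_r {X : Type} {g1 g2 : R -> X} {c s} : g1 c = g2 c -> c <= s -> path_concat g1 g2 c s = g2 s.
Proof.
rewrite /path_concat => g12 cs; case: Rle_dec => //= sc.
by rewrite (_ : s = c) //; lra.
Qed.

Section MetricFacts.

Context {X : Type} {d : X -> X -> R}.
Hypothesis d_metric : is_metric d.

Lemma metric_ge0 x y : 0 <= d x y.
Proof.
have [d0 [dC dT]] := d_metric.
by have := dT x y x; rewrite (dC y x) (proj2 (d0 x x)) //; lra.
Qed.

Definition lipschitz_on (gam : R -> X) (lo hi : R) : Prop :=
  forall s u, lo <= s -> s <= u -> u <= hi -> d (gam s) (gam u) <= u - s.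

Lemma lipschitz_on_concat {g1 g2 lo c hi} : g1 c = g2 c ->
  lipschitz_on g1 lo c -> lipschitz_on g2 c hi -> lipschitz_on (path_concat g1 g2 c) lo hi.
Proof.
have [_ [_ dT]] := d_metric.
move=> g12 L1 L2 s u los su uhi.
case: (Rle_dec u c) => uc; first by rewrite !path_concat_l //; [apply: L1 | lra].
rewrite (path_concat_r g12 (s := u)); last lra.
case: (Rle_dec s c) => sc; last by rewrite (path_concat_r g12); [apply: L2 | ]; lra.
rewrite path_concat_l //; have := L1 s c los sc (Rle_refl c); rewrite g12.
by have := L2 c u (Rle_refl c) ltac:(lra) uhi; have := dT (g1 s) (g2 c) (g2 u); lra.
Qed.

Lemma geodesic_of_lipschitz_paths :
  (forall x y, exists gam : R -> X,
     gam 0 = x /\ gam (d x y) = y /\ lipschitz_on gam 0 (d x y)) ->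
  geodesic_space d.
Proof.
have [d0 [dC dT]] := d_metric.
move=> paths x y; have [gam [gam0 [gam1 gamL]]] := paths x y.
have dxy0 := metric_ge0 x y.
have gamE s u : 0 <= s -> s <= u -> u <= d x y -> d (gam s) (gam u) = u - s.
  move=> s0 su ud; apply: Rle_antisym; first exact: gamL.
  have := dT x (gam s) y; have := dT (gam s) (gam u) y.
  have := gamL 0 s (Rle_refl 0) s0 ltac:(lra); have := gamL u (d x y) ltac:(lra) ud (Rle_refl _).
  by rewrite gam0 gam1; lra.
exists gam; split=> //; split=> // s u Hs Hu.
case: (Rle_dec s u) => su.
  by rewrite gamE; [rewrite Rabs_left1 | | |]; lra.
by rewrite dC gamE; [rewrite Rabs_right | | |]; lra.
Qed.

End MetricFacts.

Lemma gromov_hyperbolic_of_quasi_ultrametric {X : Type} (d U : X -> X -> R) (h : X -> R) (L : R) :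
  0 <= L -> (forall x y, U x y = U y x) ->
  (forall x y z, U x z <= Rmax (U x y) (U y z) + L) ->
  (forall x y, 2 * U x y - h x - h y <= d x y <= 2 * U x y - h x - h y + 2) ->
  gromov_hyperbolic d.
Proof.
move=> L0 UC Uultra dU; exists (2 * L + 3); split; first lra.
move=> w x y z; rewrite /gromov_product.
have := dU x w; have := dU z w; have := dU x z; have := dU y w; have := dU x y; have := dU y z.
have := Uultra x y z; have := Uultra x w z; have := Uultra y x w; have := Uultra y z w.
rewrite (UC y x) (UC w z) (UC z w) /Rmax /Rmin.
by repeat case: Rle_dec; lra.
Qed.

Definition strictly_increasing (phi : nat -> nat) : Prop := forall k, (phi k < phi k.+1)%N.

Lemma strictly_increasing_ge {phi} : strictly_increasing phi -> forall k, (k <= phi k)%N.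
Proof. by move=> phiI; elim=> [|k IHk] //; have := phiI k; lia. Qed.

Lemma strictly_increasing_le {phi} : strictly_increasing phi -> forall k m, (k <= m)%N -> (phi k <= phi m)%N.
Proof.
move=> phiI k m /leP; elim=> [|m' _ IH] //.
by have := phiI m'; lia.
Qed.

Lemma strictly_increasing_comp phi psi : strictly_increasing phi -> strictly_increasing psi -> strictly_increasing (phi \o psi).
Proof.
move=> phiI psiI k; have := psiI k => /= lt_psi.
by have := strictly_increasing_le phiI _ _ lt_psi; have := phiI (psi k); lia.
Qed.

Lemma extract_subseq (Q : nat -> nat -> Prop) :
  (forall m N, exists k, (N <= k)%N /\ Q m k) ->
  exists phi, strictly_increasing phi /\ forall k, Q k (phi k).
Proof.
move=> HQ; have [g Hg] := choice (fun (mN : nat * nat) k => (mN.2 <= k)%N /\ Q mN.1 k)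
                            (fun mN => HQ mN.1 mN.2).
pose phi := fix phi k := if k is k'.+1 then g (k, (phi k').+1) else g (0%N, 0%N).
exists phi; split=> [k | [|k]]; last 2 first.
- exact: (proj2 (Hg (0%N, 0%N))).
- exact: (proj2 (Hg (k.+1, (phi k).+1))).
exact: (proj1 (Hg (k.+1, (phi k).+1))).
Qed.

Lemma pigeonhole_subseq {M} {c : nat -> nat} : (forall k, c k < M)%N ->
  exists phi, strictly_increasing phi /\ exists v, forall k, c (phi k) = v.
Proof.
elim: M c => [|M IHM] c cM; first by have := cM 0%N.
case: (classic (forall N, exists k, (N <= k)%N /\ c k = M)) => [often | /not_all_ex_not [N rarely]].
  have [phi [phiI Hphi]] := extract_subseq (fun _ k => c k = M) (fun _ => often).
  by exists phi; split=> //; exists M.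
have below : forall k, (c (k + N) < M)%N.
  move=> k; have := cM (k + N)%N; suff : c (k + N)%N <> M by lia.
  by move=> E; apply: rarely; exists (k + N)%N; split=> //; lia.
have [phi [phiI [v Hv]]] := IHM _ below.
by exists (fun k => phi k + N)%N; split=> [k | ]; [have := phiI k; lia | exists v].
Qed.

Lemma Un_cv_subseq {u l phi} : strictly_increasing phi -> Un_cv u l -> Un_cv (u \o phi) l.
Proof.
move=> phiI ul eps eps0; have [N HN] := ul eps eps0.
by exists N => k kN; apply: HN; have := strictly_increasing_ge phiI k; lia.
Qed.

Lemma Un_cv_dist {u l} : Un_cv u l -> Un_cv (fun k => Rabs (u k - l)) 0.
Proof.
move=> ul eps eps0; have [N HN] := ul eps eps0.
by exists N => k kN; rewrite /Rdist Rminus_0_r Rabs_Rabsolu; apply: HN.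
Qed.

Lemma Un_cv_const c : Un_cv (fun _ => c) c.
Proof. by move=> eps eps0; exists 0%N => k _; rewrite /Rdist Rminus_diag Rabs_R0. Qed.

Lemma bolzano_weierstrass_subseq {u : nat -> R} {a b} : (forall k, a <= u k <= b) ->
  exists phi, strictly_increasing phi /\ exists l, a <= l <= b /\ Un_cv (u \o phi) l.
Proof.
move=> uab; have [l Hl] := Bolzano_Weierstrass u _ (compact_P3 a b) uab.
have near_l : forall eps N, 0 < eps -> exists k, (N <= k)%N /\ Rabs (u k - l) < eps.
  move=> eps N eps0.
  have [k [kN Hk]] := Hl (disc l (mkposreal eps eps0)) N (ex_intro _ _ (fun _ H => H)).
  by exists k; split=> //; apply/leP.
have lab : a <= l <= b.
  split; apply: Rnot_lt_le => out.
    have [k [_ /Rabs_def2 ?]] := near_l (a - l) 0%N ltac:(lra); have := uab k; lra.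
  have [k [_ /Rabs_def2 ?]] := near_l (l - b) 0%N ltac:(lra); have := uab k; lra.
have [phi [phiI Hphi]] := extract_subseq (fun m k => Rabs (u k - l) < / INR m.+1)
  (fun m N => near_l _ N (Rinv_0_lt_compat _ (lt_0_INR _ (Nat.lt_0_succ m)))).
exists phi; split=> //; exists l; split=> // eps eps0.
have [N [HN N0]] := archimed_cor1 eps eps0.
exists N => k kN; apply: (Rlt_trans _ _ _ (Hphi k)); apply: Rle_lt_trans HN.
by apply/Rinv_le_contravar; [apply: lt_0_INR | apply: le_INR]; lia.
Qed.

Section SequentialCompactness.

Context {X : Type} {d : X -> X -> R}.

Lemma seq_cv_of_dist_le {v : nat -> X} {L} {e : nat -> R} :
  Un_cv e 0 -> (forall k, d (v k) L <= e k) -> seq_cv d v L.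
Proof.
move=> e0 dle eps eps0; have [N HN] := e0 eps eps0.
exists N => k /leP kN; have := HN k kN; have := dle k.
by rewrite /Rdist Rminus_0_r; move: (Rle_abs (e k)); lra.
Qed.

Lemma ball_closed {v : nat -> X} {L p r} : is_metric d ->
  seq_cv d v L -> (forall k, d p (v k) <= r) -> d p L <= r.
Proof.
move=> [_ [_ dT]] vL vr; apply: Rnot_lt_le => out.
have [N HN] := vL (d p L - r) ltac:(lra).
by have := HN N (leqnn N); have := dT p (v N) L; have := vr N; lra.
Qed.

End SequentialCompactness.


Section GroupFacts.

Context {G : group}.
Implicit Types x y z : G.

Lemma gmulVK x y : gmul (ginv x) (gmul x y) = y.
Proof. by rewrite gmulA gmulVl gmul1l. Qed.

Lemma gmulKV x y : gmul x (gmul (ginv x) y) = y.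
Proof. by rewrite gmulA gmulVr gmul1l. Qed.

Lemma gmul_injl x y z : gmul x y = gmul x z -> y = z.
Proof. by move=> E; rewrite -(gmulVK x y) E gmulVK. Qed.

Lemma ginv_unique x y : gmul x y = gone -> x = ginv y.
Proof. by move=> E; rewrite -(gmul1r x) -(gmulVr y) gmulA E gmul1l. Qed.

Lemma ginvK x : ginv (ginv x) = x.
Proof. by symmetry; apply/ginv_unique/gmulVr. Qed.

Lemma ginvM x y : ginv (gmul x y) = gmul (ginv y) (ginv x).
Proof. by symmetry; apply: ginv_unique; rewrite -gmulA (gmulA (ginv x)) gmulVl gmul1l gmulVl. Qed.

Lemma ginv1 : ginv (@gone G) = gone.
Proof. by symmetry; apply/ginv_unique/gmul1l. Qed.

Lemma gpowD x m p : gpow x (m + p) = gmul (gpow x m) (gpow x p).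
Proof. by elim: m => [|m IHm] /=; rewrite ?gmul1l // IHm gmulA. Qed.

Lemma gpowSr x m : gpow x m.+1 = gmul (gpow x m) x.
Proof. by rewrite -addn1 gpowD /= gmul1r. Qed.

Lemma gpowV x m : gpow (ginv x) m = ginv (gpow x m).
Proof. by elim: m => [|m IHm] /=; rewrite ?ginv1 // ginvM -IHm -gpowSr. Qed.

Lemma gpowM x m p : gpow (gpow x m) p = gpow x (m * p).
Proof. by elim: p => [|p IHp] /=; rewrite ?muln0 // IHp mulnS gpowD. Qed.

Lemma conj_gpow y x m :
  gmul (gmul y (gpow x m)) (ginv y) = gpow (gmul (gmul y x) (ginv y)) m.
Proof.
elim: m => [|m IHm] /=; first by rewrite gmul1r gmulVr.
by rewrite -IHm -!gmulA gmulVK.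
Qed.

End GroupFacts.

Section Homomorphisms.

Context {G H : group} {f : G -> H}.
Hypothesis f_hom : group_hom f.

Lemma group_hom1 : f gone = gone.
Proof. by apply: (@gmul_injl _ (f gone)); rewrite -f_hom !gmul1r. Qed.

Lemma group_homV x : f (ginv x) = ginv (f x).
Proof. by apply: ginv_unique; rewrite -f_hom gmulVl group_hom1. Qed.

Lemma group_hom_gpow x m : f (gpow x m) = gpow (f x) m.
Proof. by elim: m => [|m IHm] /=; rewrite ?group_hom1 // f_hom IHm. Qed.

Lemma isometric_action_comp {X : Type} (d : X -> X -> R) (act : H -> X -> X) :
  isometric_action d act -> isometric_action d (fun g => act (f g)).
Proof.
move=> [act1 [actM actI]]; split=> [x | ]; first by rewrite group_hom1.
by split=> [g h x | g x y]; rewrite ?f_hom.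
Qed.

Lemma cocompact_action_comp {X : Type} (d : X -> X -> R) (act : H -> X -> X) :
  (forall h, exists g, f g = h) ->
  cocompact_action d act -> cocompact_action d (fun g => act (f g)).
Proof.
move=> f_surj [K [Kc cover]]; exists K; split=> // x.
have [h [y [Ky <-]]] := cover x; have [g <-] := f_surj h.
by exists g, y.
Qed.

End Homomorphisms.

Lemma isometric_action_of_contraction (G : group) {X : Type} (d : X -> X -> R)
    (act : G -> X -> X) :
  (forall x, act gone x = x) -> (forall g h x, act (gmul g h) x = act g (act h x)) ->
  (forall g x y, d (act g x) (act g y) <= d x y) -> isometric_action d act.
Proof.
move=> act1 actM contr; split=> //; split=> // g x y.
have actK z : act (ginv g) (act g z) = z by rewrite -actM gmulVl act1.
apply: Rle_antisym; first exact: contr.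
by rewrite -{1}(actK x) -{1}(actK y); apply: contr.
Qed.

Record hyperbolic_model {G : group} {X : Type} (d : X -> X -> R) (act : G -> X -> X) :
    Prop := HyperbolicModel {
  model_metric : is_metric d;
  model_geodesic : geodesic_space d;
  model_proper : proper_space d;
  model_hyperbolic : gromov_hyperbolic d;
  model_unbounded : unbounded d;
  model_isometric : isometric_action d act;
  model_cocompact : cocompact_action d act
}.

Lemma hyperbolic_model_comp {G H : group} {f : G -> H} {X : Type} (d : X -> X -> R)
    (act : H -> X -> X) :
  group_hom f -> (forall h, exists g, f g = h) ->
  hyperbolic_model d act -> hyperbolic_model d (fun g => act (f g)).
Proof.
move=> f_hom f_surj [? ? ? ? ? act_isom act_cc]; split=> //.
  exact: isometric_action_comp.
exact: cocompact_action_comp.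
Qed.

Lemma PPH_of_two_models {G : group} {A B : Type} {dA : A -> A -> R} {dB : B -> B -> R}
    {actA : G -> A -> A} {actB : G -> B -> B} :
  hyperbolic_model dA actA -> hyperbolic_model dB actB ->
  (forall (zA : A) (zB : B) (r : R), exists s : list G, forall g : G,
      dA zA (actA g zA) + dB zB (actB g zB) <= r -> In g s) ->
  PPH G.
Proof.
move=> modA modB proper; exists 2%N; split=> //.
pose X (i : 'I_2) : Type := if val i == 0%N then A else B.
pose d (i : 'I_2) : X i -> X i -> R :=
  if val i == 0%N as b return (if b then A else B) -> (if b then A else B) -> R
  then dA else dB.
pose act (i : 'I_2) : G -> X i -> X i :=
  if val i == 0%N as b return G -> (if b then A else B) -> (if b then A else B)
  then actA else actB.
exists X, d, act; split=> [[[|[|m]] ?] | z r] //.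
- by case: modA => *; repeat (split; first by []).
- by case: modB => *; repeat (split; first by []).
have [s Hs] := proper (z ord0) (z (lift ord0 ord0)) r.
exists s => g; rewrite !big_ord_recl big_ord0 Rplus_0_r.
exact: Hs.
Qed.


Definition zpowg {G : group} (x : G) (c : Z) : G :=
  if (0 <=? c)%Z then gpow x (Z.to_nat c) else gpow (ginv x) (Z.to_nat (- c)).

Section IntegerPowers.

Context {G : group}.
Implicit Types x y z : G.

Lemma zpowg0 x : zpowg x 0 = gone.
Proof. by []. Qed.

Lemma zpowg_succ x c : zpowg x (c + 1) = gmul x (zpowg x c).
Proof.
rewrite /zpowg; case: (Z.leb_spec 0 c) => c0; case: (Z.leb_spec 0 (c + 1)) => c1; try lia.
- by rewrite (_ : Z.to_nat (c + 1) = (Z.to_nat c).+1) //; lia.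
- by rewrite (_ : c = -1)%Z /= ?gmul1r ?gmulVr //; lia.
- by rewrite (_ : Z.to_nat (- c) = (Z.to_nat (- (c + 1))).+1) /= ?gmulKV //; lia.
Qed.

Lemma zpowg_pred x c : zpowg x (c - 1) = gmul (ginv x) (zpowg x c).
Proof. by rewrite -{2}(Z.sub_add 1 c) zpowg_succ gmulVK. Qed.

Lemma zpowgD x c1 c2 : zpowg x (c1 + c2) = gmul (zpowg x c1) (zpowg x c2).
Proof.
elim/Z.peano_ind: c1 => [|c IHc|c IHc]; first by rewrite gmul1l.
  have -> : (Z.succ c + c2 = (c + c2) + 1)%Z by lia.
  by rewrite -Z.add_1_r !zpowg_succ IHc gmulA.
have -> : (Z.pred c + c2 = (c + c2) - 1)%Z by lia.
by rewrite -Z.sub_1_r !zpowg_pred IHc gmulA.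
Qed.

Lemma zpowg_nat x m : zpowg x (Z.of_nat m) = gpow x m.
Proof. by rewrite /zpowg; case: Z.leb_spec => ?; [rewrite Nat2Z.id | lia]. Qed.

Lemma zpowg_oppnat x m : zpowg x (- Z.of_nat m) = gpow (ginv x) m.
Proof.
rewrite /zpowg; case: Z.leb_spec => ?; last by rewrite Z.opp_involutive Nat2Z.id.
by rewrite (_ : m = 0%N) //; lia.
Qed.

Lemma conj_gpowE {y x z} :
  gmul (gmul y x) (ginv y) = z -> forall m, gmul y (gpow x m) = gmul (gpow z m) y.
Proof. by move=> <- m; rewrite -conj_gpow -!gmulA gmulVl gmul1r. Qed.

Lemma conj_ginv y x : gmul (gmul y (ginv x)) (ginv y) = ginv (gmul (gmul y x) (ginv y)).
Proof. by rewrite !ginvM ginvK gmulA. Qed.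

Lemma commute_ginv {y x z} : gmul y x = gmul z y -> gmul x (ginv y) = gmul (ginv y) z.
Proof. by move=> E; apply: (@gmul_injl _ y); rewrite gmulKV gmulA E -gmulA gmulVr gmul1r. Qed.

End IntegerPowers.

Lemma group_hom_zpowg {G H : group} {f : G -> H} :
  group_hom f -> forall x c, f (zpowg x c) = zpowg (f x) c.
Proof. by move=> f_hom x c; rewrite /zpowg; case: ifP => _; rewrite group_hom_gpow ?group_homV. Qed.

Definition bs_nf {G : group} (a t : G) (e : nat) (c : Z) (j : nat) : G :=
  gmul (gmul (gpow (ginv t) e) (zpowg a c)) (gpow t j).

Definition is_bs_nf {G : group} (a t x : G) : Prop := exists e c j, x = bs_nf a t e c j.

Section BSNormalForm.

Context {G : group} {n : nat} {a t : G}.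
Hypothesis n_gt0 : (0 < n)%N.
Hypothesis bs : bs_rel n a t.

Lemma bs_conj_zpowg c : gmul t (zpowg a c) = gmul (zpowg a (Z.of_nat n * c)) t.
Proof.
have bsV : gmul (gmul t (ginv a)) (ginv t) = gpow (ginv a) n by rewrite conj_ginv bs gpowV.
rewrite /zpowg; case: (Z.leb_spec 0 c) => c0; case: Z.leb_spec => nc0; try nia.
  by rewrite (conj_gpowE bs) gpowM; congr (gmul (gpow _ _) _); lia.
by rewrite (conj_gpowE bsV) gpowM; congr (gmul (gpow _ _) _); nia.
Qed.

Lemma bs_zpowg_conjV e c :
  gmul (zpowg a c) (gpow (ginv t) e) = gmul (gpow (ginv t) e) (zpowg a (Z.of_nat (n ^ e) * c)).
Proof.
elim: e c => [|e IHe] c; first by rewrite expn0 Z.mul_1_l /= gmul1r gmul1l.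
rewrite [gpow _ e.+1]/= gmulA (commute_ginv (bs_conj_zpowg c)) -gmulA IHe gmulA.
by rewrite expnS Nat2Z.inj_mul; congr (gmul _ (zpowg a _)); lia.
Qed.

Lemma bs_nf_mull_zpowg m e c j :
  gmul (zpowg a m) (bs_nf a t e c j) = bs_nf a t e (Z.of_nat (n ^ e) * m + c) j.
Proof. by rewrite /bs_nf !gmulA bs_zpowg_conjV -(gmulA (gpow _ e)) -zpowgD. Qed.

Lemma bs_nf_mull_t e c j :
  gmul t (bs_nf a t e c j) =
  if e is e'.+1 then bs_nf a t e' c j else bs_nf a t 0 (Z.of_nat n * c) j.+1.
Proof.
case: e => [|e]; rewrite /bs_nf /=; last by rewrite -!gmulA gmulKV.
by rewrite !gmul1l gmulA bs_conj_zpowg -gmulA.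
Qed.

Lemma bs_nf_mull_tV e c j : gmul (ginv t) (bs_nf a t e c j) = bs_nf a t e.+1 c j.
Proof. by rewrite /bs_nf /= !gmulA. Qed.

Lemma is_bs_nf_mull {x y} : gen_by a t x -> is_bs_nf a t y ->
  is_bs_nf a t (gmul x y) /\ is_bs_nf a t (gmul (ginv x) y).
Proof.
have aE y' : gmul a y' = gmul (zpowg a 1) y' by rewrite /zpowg /= gmul1r.
have aVE y' : gmul (ginv a) y' = gmul (zpowg a (-1)) y' by rewrite /zpowg /= gmul1r.
move=> gx; elim: gx y => [||| x1 x2 _ IH1 _ IH2 | z _ IH] y [e [c [j ->]]].
- rewrite aE aVE !bs_nf_mull_zpowg.
  by split; [exists e, (Z.of_nat (n ^ e) * 1 + c)%Z, j | exists e, (Z.of_nat (n ^ e) * -1 + c)%Z, j].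
- rewrite bs_nf_mull_tV bs_nf_mull_t; split; last by exists e.+1, c, j.
  by case: e => [|e]; [exists 0%N, (Z.of_nat n * c)%Z, j.+1 | exists e, c, j].
- by rewrite ginv1 gmul1l; split; exists e, c, j.
- have [IH2a IH2b] := IH2 _ (ex_intro _ e (ex_intro _ c (ex_intro _ j erefl))).
  split; first by rewrite -gmulA; apply: (proj1 (IH1 _ IH2a)).
  rewrite ginvM -gmulA; apply: (proj2 (IH2 _ _)).
  exact: (proj2 (IH1 _ (ex_intro _ e (ex_intro _ c (ex_intro _ j erefl))))).
- have [H1 H2] := IH _ (ex_intro _ e (ex_intro _ c (ex_intro _ j erefl))).
  by rewrite ginvK; split.
Qed.

Lemma bs_normal_form : (forall g : G, gen_by a t g) -> forall x, is_bs_nf a t x.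
Proof.
move=> gen x; have nf1 : is_bs_nf a t gone by exists 0%N, 0%Z, 0%N; rewrite /bs_nf /= !gmul1l.
by rewrite -(gmul1r x); apply: (proj1 (is_bs_nf_mull (gen x) nf1)).
Qed.

End BSNormalForm.


(* BS(1,n) as Z[1/n] x| Z: the pair (k, b) stands for a^b t^k, so that
   (k, b) (k', b') = (k + k', b + n^k b'). *)
Definition bs_elt (n : nat) := {p : Z * R | nadic n p.2}.

Section Model.

Context {n : nat}.
Hypothesis n_gt0 : (0 < n)%N.

Definition ht (h : bs_elt n) : Z := (proj1_sig h).1.
Definition ha (h : bs_elt n) : R := (proj1_sig h).2.

Lemma ha_nadic h : nadic n (ha h).
Proof. exact: proj2_sig h. Qed.

Lemma bs_elt_eq h1 h2 : ht h1 = ht h2 -> ha h1 = ha h2 -> h1 = h2.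
Proof.
case: h1 h2 => [[k1 b1] H1] [[k2 b2] H2]; rewrite /ht /ha /= => -> E.
by move: H1 H2; rewrite E => H1 H2; rewrite (proof_irrelevance _ H1 H2).
Qed.

Definition mk_elt k {b} (Hb : nadic n b) : bs_elt n := exist (fun p => nadic n p.2) (k, b) Hb.

Lemma ht_mk k b (Hb : nadic n b) : ht (mk_elt k Hb) = k.
Proof. by []. Qed.

Lemma ha_mk k b (Hb : nadic n b) : ha (mk_elt k Hb) = b.
Proof. by []. Qed.

Definition bs_mul h1 h2 : bs_elt n :=
  mk_elt (ht h1 + ht h2) (nadic_add (ha_nadic h1) (nadic_scale n_gt0 (ht h1) (ha_nadic h2))).

Definition bs_inv h : bs_elt n :=
  mk_elt (- ht h) (nadic_opp (nadic_scale n_gt0 (- ht h) (ha_nadic h))).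

Definition bs_one : bs_elt n := mk_elt 0 (nadic_IZR n 0).

Lemma ht_bs_one : ht bs_one = 0%Z.
Proof. by []. Qed.

Lemma ha_bs_one : ha bs_one = 0.
Proof. by []. Qed.

Lemma ht_bs_mul h1 h2 : ht (bs_mul h1 h2) = (ht h1 + ht h2)%Z.
Proof. by []. Qed.

Lemma ha_bs_mul h1 h2 : ha (bs_mul h1 h2) = ha h1 + powZ n (ht h1) * ha h2.
Proof. by []. Qed.

Lemma ht_bs_inv h : ht (bs_inv h) = (- ht h)%Z.
Proof. by []. Qed.

Lemma ha_bs_inv h : ha (bs_inv h) = - (powZ n (- ht h) * ha h).
Proof. by []. Qed.

Lemma bs_mulA x y z : bs_mul x (bs_mul y z) = bs_mul (bs_mul x y) z.
Proof.
apply: bs_elt_eq; first by rewrite !ht_bs_mul; lia.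
by rewrite !ha_bs_mul !ht_bs_mul (powZ_add n_gt0); ring.
Qed.

Lemma bs_mul1l x : bs_mul bs_one x = x.
Proof. by apply: bs_elt_eq; rewrite ?ht_bs_mul ?ha_bs_mul ?ht_bs_one ?ha_bs_one ?powZ0 //; ring. Qed.

Lemma bs_mul1r x : bs_mul x bs_one = x.
Proof. by apply: bs_elt_eq; rewrite ?ht_bs_mul ?ha_bs_mul ?ht_bs_one ?ha_bs_one; [lia | ring]. Qed.

Lemma bs_mulVl x : bs_mul (bs_inv x) x = bs_one.
Proof.
apply: bs_elt_eq; rewrite ?ht_bs_mul ?ha_bs_mul ?ht_bs_inv ?ha_bs_inv ?ht_bs_one ?ha_bs_one; [lia | ring].
Qed.

Lemma bs_mulVr x : bs_mul x (bs_inv x) = bs_one.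
Proof.
apply: bs_elt_eq; rewrite ?ht_bs_mul ?ha_bs_mul ?ht_bs_inv ?ha_bs_inv ?ht_bs_one ?ha_bs_one; first lia.
have -> : ha x + powZ n (ht x) * - (powZ n (- ht x) * ha x) =
          ha x * (1 - powZ n (- ht x) * powZ n (ht x)) by ring.
by rewrite (powZ_oppK n_gt0); ring.
Qed.

Definition BS : group :=
  @Defs.Group (bs_elt n) bs_mul bs_inv bs_one bs_mulA bs_mul1l bs_mul1r bs_mulVl bs_mulVr.

Definition bs_a : bs_elt n := mk_elt 0 (nadic_IZR n 1).
Definition bs_t : bs_elt n := mk_elt 1 (nadic_IZR n 0).

Lemma gpow_vertical (x : BS) m :
  ha x = 0 -> ht (gpow x m) = (Z.of_nat m * ht x)%Z /\ ha (gpow x m) = 0.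
Proof.
move=> x0; elim: m => [|m [IHt IHa]] //.
rewrite -[gpow x m.+1]/(gmul x (gpow x m)) ht_bs_mul ha_bs_mul IHt IHa x0.
by split; [lia | ring].
Qed.

Lemma gpow_horizontal (x : BS) m :
  ht x = 0%Z -> ht (gpow x m) = 0%Z /\ ha (gpow x m) = INR m * ha x.
Proof.
move=> x0; elim: m => [|m [IHt IHa]]; first by split=> //=; rewrite ha_bs_one; ring.
rewrite -[gpow x m.+1]/(gmul x (gpow x m)) ht_bs_mul ha_bs_mul IHt IHa x0 S_INR powZ0.
by split; [lia | ring].
Qed.

Lemma zpowg_bs_a c : ht (zpowg (G := BS) bs_a c) = 0%Z /\ ha (zpowg (G := BS) bs_a c) = IZR c.
Proof.
rewrite /zpowg; case: Z.leb_spec => c0.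
  have [-> ->] := gpow_horizontal bs_a (Z.to_nat c) erefl.
  by rewrite INR_IZR_INZ Z2Nat.id // /ha /=; split=> //; ring.
have [-> ->] := gpow_horizontal (ginv (bs_a : BS)) (Z.to_nat (- c)) erefl.
by rewrite INR_IZR_INZ Z2Nat.id ?ha_bs_inv /ha /= /powZ /=; [split=> //; rewrite opp_IZR; ring | lia].
Qed.

Lemma bs_rel_model : bs_rel (G := BS) n bs_a bs_t.
Proof.
have [E1 E2] := gpow_horizontal bs_a n erefl.
apply: bs_elt_eq; first by rewrite E1.
by rewrite E2 !ha_bs_mul ht_bs_mul ha_bs_inv /ha /ht /= /powZ /=; ring.
Qed.

Lemma bs_nf_model e c j :
  ht (bs_nf (G := BS) bs_a bs_t e c j) = (Z.of_nat j - Z.of_nat e)%Z /\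
  ha (bs_nf (G := BS) bs_a bs_t e c j) = powZ n (- Z.of_nat e) * IZR c.
Proof.
have [A1 A2] := zpowg_bs_a c.
have tV0 : ha (ginv (bs_t : BS)) = 0 by rewrite ha_bs_inv /ha /=; ring.
have [B1 B2] := gpow_vertical _ e tV0.
have [C1 C2] := gpow_vertical bs_t j erefl.
rewrite /bs_nf !ht_bs_mul !ha_bs_mul A1 A2 B1 B2 C1 C2 ht_bs_inv /ht /=.
by rewrite (_ : (Z.of_nat e * -1 = - Z.of_nat e)%Z); [split; [lia | ring] | lia].
Qed.

End Model.


Definition Zrange (M : nat) : list Z :=
  map (fun i => Z.of_nat i - Z.of_nat M)%Z (List.seq 0 (2 * M + 1)).

Lemma in_Zrange M z : (Z.abs z <= Z.of_nat M)%Z -> In z (Zrange M).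
Proof.
move=> zM; apply/in_map_iff; exists (Z.to_nat (z + Z.of_nat M)).
by split; [lia | apply/in_seq; lia].
Qed.

Section Isomorphism.

Context {G : group} {n : nat} {a t : G}.
Hypothesis n_gt0 : (0 < n)%N.
Hypothesis bs : bs_rel n a t.
Hypothesis gen : forall g : G, gen_by a t g.
Context {f : G -> BS n_gt0}.
Hypotheses (f_hom : group_hom f) (fa : f a = bs_a) (ft : f t = bs_t).

Lemma iso_bs_nf e c j : f (bs_nf a t e c j) = bs_nf (G := BS n_gt0) bs_a bs_t e c j.
Proof.
by rewrite /bs_nf !f_hom (group_hom_zpowg f_hom) !(group_hom_gpow f_hom) (group_homV f_hom) fa ft.
Qed.

Lemma iso_injective x y : f x = f y -> x = y.
Proof.
move=> fxy; suff trivial_kernel : forall z, f z = gone -> z = gone.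
  apply: (@gmul_injl _ (ginv y)); rewrite gmulVl; apply: trivial_kernel.
  by rewrite f_hom (group_homV f_hom) fxy gmulVl.
move=> z; have [e [c [j ->]]] := bs_normal_form n_gt0 bs gen z.
rewrite iso_bs_nf => fz1; have [E1 E2] := bs_nf_model n_gt0 e c j.
rewrite fz1 in E1 E2; have pos := powZ_gt0 n_gt0 (- Z.of_nat e).
have -> : c = 0%Z by apply: eq_IZR; move: E2; rewrite ha_bs_one; nra.
have -> : j = e by move: E1; rewrite ht_bs_one; lia.
by rewrite /bs_nf zpowg0 gmul1r gpowV gmulVl.
Qed.

Lemma iso_bs_nf_coords e c j h :
  ht h = (Z.of_nat j - Z.of_nat e)%Z -> ha h = powZ n (- Z.of_nat e) * IZR c ->
  f (bs_nf a t e c j) = h.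
Proof.
have [E1 E2] := bs_nf_model n_gt0 e c j.
by move=> Ht Ha; rewrite iso_bs_nf; apply: bs_elt_eq; rewrite ?E1 ?E2.
Qed.

Lemma iso_surjective h : exists g, f g = h.
Proof.
have [e [c Hc]] := ha_nadic h; pose E := (e + Z.abs_nat (ht h))%N.
exists (bs_nf a t E (c * Z.of_nat (n ^ Z.abs_nat (ht h))) (Z.to_nat (Z.of_nat E + ht h))).
apply: iso_bs_nf_coords; first by rewrite /E; lia.
rewrite mult_IZR -Hc -INR_IZR_INZ INR_expn -!powZ_nat /E Nat2Z.inj_add Z.opp_add_distr.
by rewrite !(powZ_add n_gt0) Rmult_assoc !(powZ_cancel n_gt0).
Qed.

Lemma iso_finite_box K E (C : R) : exists s : list G, forall g : G,
  (Z.abs (ht (f g)) <= Z.of_nat K)%Z -> is_int (ha (f g) * INR n ^ E) ->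
  Rabs (ha (f g)) <= C -> In g s.
Proof.
pose M := Z.to_nat (up (C * INR n ^ E)).
exists (flat_map (fun k => map (fun c => bs_nf a t (E + K) c (Z.to_nat (Z.of_nat (E + K) + k)))
                   (Zrange (M * n ^ K))) (Zrange K)).
move=> g gK [c Hc] gC; apply/in_flat_map; exists (ht (f g)); split; first exact: in_Zrange.
apply/in_map_iff; exists (c * Z.of_nat (n ^ K))%Z; split.
  apply: iso_injective; apply: iso_bs_nf_coords; first lia.
  rewrite mult_IZR -Hc -INR_IZR_INZ INR_expn -!powZ_nat Nat2Z.inj_add Z.opp_add_distr.
  by rewrite !(powZ_add n_gt0) Rmult_assoc !(powZ_cancel n_gt0).
apply: in_Zrange; rewrite Z.abs_mul Nat2Z.inj_mul (Z.abs_eq (Z.of_nat _)) //; last lia.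
suff : (Z.abs c <= Z.of_nat M)%Z by nia.
have nE := pow_lt _ E (INR_n_gt0 n_gt0); have [upC _] := archimed (C * INR n ^ E).
have : IZR (Z.abs c) <= C * INR n ^ E.
  by rewrite abs_IZR -Hc Rabs_mult (Rabs_pos_eq (INR n ^ E)); [apply: Rmult_le_compat_r | ]; lra.
move=> cC; have /lt_IZR : IZR (Z.abs c) < IZR (up (C * INR n ^ E)) by lra.
by rewrite /M; lia.
Qed.

End Isomorphism.


(* A point (s, rho) of the Bass-Serre tree of BS(1,n): s is the height (vertices sit at
   integer heights) and rho in Z[1/n] /\ [0,1) names the branch below height ceil(s). *)
Definition tpt (n : nat) := {p : R * R | frac_part p.2 = p.2 /\ nadic n p.2}.

Section Tree.

Context {n : nat}.
Hypothesis n_gt0 : (0 < n)%N.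
Implicit Types p q : tpt n.

Definition th p : R := (proj1_sig p).1.
Definition tr p : R := (proj1_sig p).2.

Lemma tpt_eq p q : th p = th q -> tr p = tr q -> p = q.
Proof.
case: p q => [[s1 r1] H1] [[s2 r2] H2]; rewrite /th /tr /= => -> E.
by move: H1 H2; rewrite E => H1 H2; rewrite (proof_irrelevance _ H1 H2).
Qed.

Lemma tr_frac p : frac_part (tr p) = tr p.
Proof. exact: (proj1 (proj2_sig p)). Qed.

Lemma tr_nadic p : nadic n (tr p).
Proof. exact: (proj2 (proj2_sig p)). Qed.

Lemma tr_bounds p : 0 <= tr p < 1.
Proof. by rewrite -tr_frac; apply: frac_part_bounds. Qed.

(* The branch of the ancestor of [p] at the integer height [J]. *)
Definition tlift (J : Z) p : R := frac_part (powZ n (J - Int_part (th p)) * tr p).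

Definition tmerged J p q : Prop := tlift J p = tlift J q.

Lemma tlift_up {J J'} p : (J <= J')%Z -> tlift J' p = frac_part (powZ n (J' - J) * tlift J p).
Proof.
move=> JJ'; rewrite /tlift frac_part_mul_int; last by apply: is_int_powZ; lia.
by rewrite -Rmult_assoc -powZ_add //; do 3 f_equal; lia.
Qed.

Lemma tmerged_up {J J' p q} : (J <= J')%Z -> tmerged J p q -> tmerged J' p q.
Proof. by rewrite /tmerged => JJ' E; rewrite !(tlift_up _ JJ') E. Qed.

Lemma tlift_eventually p : exists J0, forall J, (J0 <= J)%Z -> tlift J p = 0.
Proof.
have [e He] := tr_nadic p; exists (Int_part (th p) + Z.of_nat e)%Z => J J0J.
apply: frac_part_int; rewrite -powZ_nat in He.
have -> : (J - Int_part (th p) = (J - Int_part (th p) - Z.of_nat e) + Z.of_nat e)%Z by lia.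
rewrite (powZ_add n_gt0) Rmult_assoc (Rmult_comm (powZ n (Z.of_nat e))).
by apply: is_int_mul => //; apply: is_int_powZ; lia.
Qed.

Definition tfloor p q : Z := Z.max (Int_part (th p)) (Int_part (th q)).

Lemma tmerge_least p q : exists i : nat,
  tmerged (tfloor p q + Z.of_nat i) p q /\
  forall j : nat, tmerged (tfloor p q + Z.of_nat j) p q -> (i <= j)%N.
Proof.
have [J1 H1] := tlift_eventually p; have [J2 H2] := tlift_eventually q.
have ex : exists i : nat, tmerged (tfloor p q + Z.of_nat i) p q.
  exists (Z.to_nat (Z.max J1 J2 - tfloor p q)); rewrite /tmerged H1 ?H2 //; lia.
have [i [[Pi Ci] _]] := dec_inh_nat_subset_has_unique_least_element _ (fun i => classic _) ex.
by exists i; split=> // j /Ci /leP.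
Qed.

Definition tmerge_offset p q : nat :=
  proj1_sig (constructive_indefinite_description _ (tmerge_least p q)).

Lemma tmerge_offsetP p q :
  tmerged (tfloor p q + Z.of_nat (tmerge_offset p q)) p q /\
  forall j : nat, tmerged (tfloor p q + Z.of_nat j) p q -> (tmerge_offset p q <= j)%N.
Proof. exact: proj2_sig (constructive_indefinite_description _ (tmerge_least p q)). Qed.

(* The height at which the upward rays from [p] and [q] meet. *)
Definition tmeet p q : R :=
  Rmax (Rmax (th p) (th q)) (IZR (tfloor p q + Z.of_nat (tmerge_offset p q))).

Lemma tmeet_ge p q : th p <= tmeet p q /\ th q <= tmeet p q.
Proof. by rewrite /tmeet /Rmax; repeat case: Rle_dec; lra. Qed.

Lemma tmerged_tmeet p q : tmerged (Int_part (tmeet p q)) p q.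
Proof.
apply: tmerged_up (proj1 (tmerge_offsetP p q)).
by apply/Int_part_ge/Rmax_r.
Qed.

Lemma tmeet_le {p q u} : th p <= u -> th q <= u -> tmerged (Int_part u) p q -> tmeet p q <= u.
Proof.
move=> pu qu Hu; apply: Rmax_lub; first exact: Rmax_lub.
have fpu := Int_part_le pu; have fqu := Int_part_le qu.
have : (tmerge_offset p q <= Z.to_nat (Int_part u - tfloor p q))%N.
  by apply: (proj2 (tmerge_offsetP p q)); rewrite Z2Nat.id /tfloor; [ | lia]; rewrite Zplus_minus.
move=> le_off; have /IZR_le : (tfloor p q + Z.of_nat (tmerge_offset p q) <= Int_part u)%Z.
  by rewrite /tfloor in le_off *; lia.
by have := Int_part_bounds u; lra.
Qed.

Lemma tmeet_sym p q : tmeet p q = tmeet q p.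
Proof.
have [? ?] := tmeet_ge p q; have [? ?] := tmeet_ge q p.
by apply: Rle_antisym; apply: tmeet_le => //; apply/esym/tmerged_tmeet.
Qed.

Lemma tmeet_ultra p q r : tmeet p r <= Rmax (tmeet p q) (tmeet q r).
Proof.
have [? ?] := tmeet_ge p q; have [? ?] := tmeet_ge q r.
have ? := Rmax_l (tmeet p q) (tmeet q r); have ? := Rmax_r (tmeet p q) (tmeet q r).
apply: tmeet_le; try lra.
have mpq := tmerged_up (Int_part_le (Rmax_l (tmeet p q) (tmeet q r))) (tmerged_tmeet p q).
have mqr := tmerged_up (Int_part_le (Rmax_r (tmeet p q) (tmeet q r))) (tmerged_tmeet q r).
by rewrite /tmerged mpq.
Qed.

Definition tdist p q : R := 2 * tmeet p q - th p - th q.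

Lemma tdist_le {p q u} : th p <= u -> th q <= u -> tmerged (Int_part u) p q ->
  tdist p q <= 2 * u - th p - th q.
Proof. by move=> pu qu Hu; have := tmeet_le pu qu Hu; rewrite /tdist; lra. Qed.

Lemma tdist_ge p q : Rabs (th p - th q) <= tdist p q.
Proof. by have [? ?] := tmeet_ge p q; apply: Rabs_le; rewrite /tdist; lra. Qed.

Lemma tdist_metric : is_metric tdist.
Proof.
split; [|split] => [p q | p q | p q r].
- split=> [d0 | <-]; last first.
    have := tdist_le (Rle_refl (th p)) (Rle_refl _) erefl; have := tdist_ge p p.
    by rewrite Rminus_diag Rabs_R0; lra.
  have pq : th p = th q.
    have := tdist_ge p q; rewrite d0.
    by have := Rle_abs (th p - th q); have := Rle_abs (th q - th p); rewrite Rabs_minus_sym; lra.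
  have := tmerged_tmeet p q; rewrite (_ : tmeet p q = th p); last by move: d0; rewrite /tdist; lra.
  rewrite /tmerged /tlift -pq Z.sub_diag powZ0 !Rmult_1_l !tr_frac => Rpq.
  exact: tpt_eq.
- by rewrite /tdist tmeet_sym; ring.
- have := tmeet_ultra p q r; have [? ?] := tmeet_ge p q; have [? ?] := tmeet_ge q r.
  by rewrite /tdist /Rmax; case: Rle_dec; lra.
Qed.

Lemma tdist_hyperbolic : gromov_hyperbolic tdist.
Proof.
apply: (gromov_hyperbolic_of_quasi_ultrametric tdist tmeet th 0 (Rle_refl 0) tmeet_sym) => [p q r | p q].
  by rewrite Rplus_0_r; apply: tmeet_ultra.
by rewrite /tdist; lra.
Qed.

Lemma tup_proof p s :
  frac_part (s, tlift (Int_part s) p).2 = (s, tlift (Int_part s) p).2 /\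
  nadic n (s, tlift (Int_part s) p).2.
Proof.
split; first exact: frac_part_idem.
by apply/nadic_frac_part/nadic_scale/tr_nadic.
Qed.

(* The point at height [s] on the vertical line through [p]. *)
Definition tup p s : tpt n := exist _ (s, tlift (Int_part s) p) (tup_proof p s).

Lemma th_tup p s : th (tup p s) = s.
Proof. by []. Qed.

Lemma tlift_tup p s J : (Int_part s <= J)%Z -> tlift J (tup p s) = tlift J p.
Proof.
by move=> sJ; rewrite (tlift_up p sJ) {1}/tlift th_tup.
Qed.

Lemma tup_th p : tup p (th p) = p.
Proof. by apply: tpt_eq => //; rewrite {1}/tr /= /tlift Z.sub_diag powZ0 Rmult_1_l tr_frac. Qed.

Lemma tup_merged p q u : tmerged (Int_part u) p q -> tup p u = tup q u.
Proof. by move=> Hu; apply: tpt_eq => //; rewrite /tr /=. Qed.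

Lemma tup_eq p q : Int_part (th p) = Int_part (th q) -> tr p = tr q -> q = tup p (th q).
Proof.
move=> Epq Rpq; apply: tpt_eq => //.
by rewrite /tr /= /tlift -Epq Z.sub_diag powZ0 Rmult_1_l -/(tr p) tr_frac.
Qed.

Lemma tdist_tup p s1 s2 : tdist (tup p s1) (tup p s2) <= Rabs (s1 - s2).
Proof.
have le1 := Rmax_l s1 s2; have le2 := Rmax_r s1 s2.
have m : tmerged (Int_part (Rmax s1 s2)) (tup p s1) (tup p s2).
  by rewrite /tmerged !tlift_tup //; apply: Int_part_le.
apply: Rle_trans (tdist_le (p := tup p s1) (q := tup p s2) le1 le2 m) _.
by rewrite !th_tup /Rmax; case: Rle_dec => ?; [rewrite Rabs_left1 | rewrite Rabs_right]; lra.
Qed.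

Lemma tdist_geodesic : geodesic_space tdist.
Proof.
apply: (geodesic_of_lipschitz_paths tdist_metric) => p q.
pose c := tmeet p q - th p; have [? ?] := tmeet_ge p q.
pose g1 s := tup p (th p + s); pose g2 s := tup q (th q + tdist p q - s).
have g12 : g1 c = g2 c.
  rewrite /g1 /g2 /c /tdist; have -> : th p + (tmeet p q - th p) = tmeet p q by ring.
  have -> : th q + (2 * tmeet p q - th p - th q) - (tmeet p q - th p) = tmeet p q by ring.
  exact/tup_merged/tmerged_tmeet.
exists (path_concat g1 g2 c); split; [|split].
- by rewrite path_concat_l /g1 ?Rplus_0_r ?tup_th // /c; lra.
- rewrite (path_concat_r g12) /g2; last by rewrite /c /tdist; lra.
  have -> : th q + tdist p q - tdist p q = th q by ring.
  exact: tup_th.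
apply: (lipschitz_on_concat tdist_metric g12) => s u _ su _.
  by apply: Rle_trans (tdist_tup _ _ _) _; rewrite Rabs_left1; lra.
by apply: Rle_trans (tdist_tup _ _ _) _; rewrite Rabs_right; lra.
Qed.

Lemma tbase_proof (s : R) : frac_part (s, 0).2 = (s, 0).2 /\ nadic n (s, 0).2.
Proof. by split=> /=; [apply: frac_part_small; lra | apply: (nadic_IZR n 0)]. Qed.

Definition tbase s : tpt n := exist _ (s, 0) (tbase_proof s).

Lemma th_tbase s : th (tbase s) = s.
Proof. by []. Qed.

Lemma tr_tbase s : tr (tbase s) = 0.
Proof. by []. Qed.

Lemma tbase_tup s : tbase s = tup (tbase 0) s.
Proof. by apply: tpt_eq => //; rewrite {2}/tr /= /tlift /tr /= Rmult_0_r fp_R0. Qed.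

Lemma tdist_tbase s1 s2 : tdist (tbase s1) (tbase s2) <= Rabs (s1 - s2).
Proof. by rewrite (tbase_tup s1) (tbase_tup s2); apply: tdist_tup. Qed.

Lemma tbase_tr0 {p} : tr p = 0 -> p = tbase (th p).
Proof. by move=> p0; apply: tpt_eq. Qed.

Definition tbase_segment p : Prop := 0 <= th p <= 1 /\ tr p = 0.

Lemma tbase_segment_compact : compact_set tdist tbase_segment.
Proof.
move=> u Ku; have [phi [phiI [l [l01 cvl]]]] := bolzano_weierstrass_subseq (fun k => proj1 (Ku k)).
exists phi; split=> //; exists (tbase l); split; first by split.
apply: seq_cv_of_dist_le (Un_cv_dist cvl) _ => k.
by rewrite [u (phi k)]tbase_tr0; [apply: tdist_tbase | apply: (proj2 (Ku _))].
Qed.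

Lemma tdist_unbounded : unbounded tdist.
Proof.
move=> r; exists (tbase 0), (tbase (Rabs r + 1)); apply: Rlt_le_trans (tdist_ge _ _).
rewrite /th /= Rabs_left1; have := Rle_abs r; have := Rabs_pos r; lra.
Qed.

Lemma tball_meet {p q r} : tdist p q <= r ->
  tmerged (Int_part (th p + r)) p q /\ th p - r <= th q <= th p + r.
Proof.
move=> pq; have [? ?] := tmeet_ge p q; split.
  by apply: tmerged_up (tmerged_tmeet p q); apply: Int_part_le; rewrite /tdist in pq; lra.
by have := tdist_ge p q; have := Rle_abs (th p - th q); have := Rle_abs (th q - th p);
   rewrite Rabs_minus_sym; lra.
Qed.

Definition tbranch_code q (i : nat) : nat :=
  Z.to_nat (Int_part (powZ n (Z.of_nat i) * tr q)).

Lemma tbranch_code_lt q i : (tbranch_code q i < n ^ i)%N.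
Proof.
have [r0 r1] := tr_bounds q; have ni := pow_lt _ i (INR_n_gt0 n_gt0).
have [lo _] := Int_part_bounds (INR n ^ i * tr q).
have /lt_IZR : IZR (Int_part (INR n ^ i * tr q)) < IZR (Z.of_nat (n ^ i)).
  by rewrite -INR_IZR_INZ INR_expn; nra.
by rewrite /tbranch_code powZ_nat; lia.
Qed.

Lemma tbranch_codeE J p q i : tmerged J p q -> (Int_part (th q) + Z.of_nat i = J)%Z ->
  powZ n (Z.of_nat i) * tr q = tlift J p + INR (tbranch_code q i).
Proof.
move=> Hm qJ; have [r0 _] := tr_bounds q; have ni := powZ_gt0 n_gt0 (Z.of_nat i).
have code0 : (0 <= Int_part (powZ n (Z.of_nat i) * tr q))%Z by apply: Int_part_ge; nra.
rewrite /tbranch_code INR_IZR_INZ Z2Nat.id // Hm /tlift -qJ Z.add_simpl_l Rplus_comm.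
exact: Rplus_Int_part_frac_part.
Qed.

Lemma tball_branch_subseq {p r} {u : nat -> tpt n} : (forall k, tdist p (u k) <= r) ->
  exists phi : nat -> nat, strictly_increasing phi /\ exists j : Z, forall k : nat,
    Int_part (th (u (phi k))) = j /\ u (phi k) = tup (u (phi 0%N)) (th (u (phi k))).
Proof.
move=> ur; pose J := Int_part (th p + r); have Hb k := tball_meet (ur k).
pose lev k := Z.to_nat (J - Int_part (th (u k))).
have levJ k : (Int_part (th (u k)) + Z.of_nat (lev k) = J)%Z.
  by have := Int_part_le (proj2 (proj2 (Hb k))); rewrite /lev /J; lia.
have lev_lt k : (lev k < Z.to_nat (J - Int_part (th p - r)) + 1)%N.
  by have := Int_part_le (proj1 (proj2 (Hb k))); rewrite /lev /J; lia.
have [phi1 [phi1I [i Hi]]] := pigeonhole_subseq lev_lt.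
have [phi2 [phi2I [m Hm]]] := pigeonhole_subseq (fun k => tbranch_code_lt (u (phi1 k)) i).
have rE k : powZ n (Z.of_nat i) * tr (u (phi1 (phi2 k))) = tlift J p + INR m.
  by rewrite -(Hm k) -(Hi (phi2 k)); apply: tbranch_codeE; [apply: (proj1 (Hb _)) | apply: levJ].
exists (phi1 \o phi2); split; first exact: strictly_increasing_comp.
exists (J - Z.of_nat i)%Z => k /=; have lk := levJ (phi1 (phi2 k)); rewrite Hi in lk.
split; first lia.
apply: tup_eq; first by have := levJ (phi1 (phi2 0%N)); rewrite Hi; lia.
have ni := powZ_gt0 n_gt0 (Z.of_nat i).
by apply: (Rmult_eq_reg_l (powZ n (Z.of_nat i))); [rewrite !rE | lra].
Qed.

Lemma tdist_proper : proper_space tdist.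
Proof.
move=> p r u ur; have [phi1 [phi1I [j Hj]]] := tball_branch_subseq ur.
have jb k : IZR j <= th (u (phi1 k)) <= IZR j + 1.
  by have := Int_part_bounds (th (u (phi1 k))); rewrite (proj1 (Hj k)); lra.
have [phi2 [phi2I [l [_ cvl]]]] := bolzano_weierstrass_subseq jb.
exists (phi1 \o phi2); split; first exact: strictly_increasing_comp.
have cvL : seq_cv tdist (u \o (phi1 \o phi2)) (tup (u (phi1 0%N)) l).
  apply: seq_cv_of_dist_le (Un_cv_dist cvl) _ => k /=.
  by rewrite (proj2 (Hj (phi2 k))); apply: tdist_tup.
exists (tup (u (phi1 0%N)) l); split=> //.
by apply: ball_closed tdist_metric cvL _ => k; apply: ur.
Qed.


Lemma tact_proof (h : bs_elt n) p :
  let x := (th p - IZR (ht h), frac_part (tr p + powZ n (Int_part (th p) - ht h) * ha h)) in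
  frac_part x.2 = x.2 /\ nadic n x.2.
Proof.
split; first exact: frac_part_idem.
by apply/nadic_frac_part/nadic_add; [apply: tr_nadic | apply/nadic_scale/ha_nadic].
Qed.

Definition tact (h : bs_elt n) p : tpt n := exist _ _ (tact_proof h p).

Lemma th_tact h p : th (tact h p) = th p - IZR (ht h).
Proof. by []. Qed.

Lemma tr_tact h p : tr (tact h p) = frac_part (tr p + powZ n (Int_part (th p) - ht h) * ha h).
Proof. by []. Qed.

Lemma tlift_tact h p J : (Int_part (th p) - ht h <= J)%Z ->
  tlift J (tact h p) = frac_part (tlift (J + ht h) p + powZ n J * ha h).
Proof.
move=> pJ; rewrite /tlift th_tact Int_part_subZ tr_tact frac_part_mul_int; last first.
  by apply: is_int_powZ; lia.
rewrite frac_part_addl Rmult_plus_distr_l -Rmult_assoc -powZ_add //.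
by do 4 f_equal; lia.
Qed.

Lemma tact_one p : tact (gone : BS n_gt0) p = p.
Proof.
apply: tpt_eq; first by rewrite th_tact ht_bs_one Rminus_0_r.
by rewrite tr_tact ha_bs_one Rmult_0_r Rplus_0_r tr_frac.
Qed.

Lemma tact_mul (h1 h2 : BS n_gt0) p : tact (gmul h1 h2) p = tact h1 (tact h2 p).
Proof.
apply: tpt_eq; first by rewrite !th_tact ht_bs_mul plus_IZR; ring.
rewrite !tr_tact th_tact Int_part_subZ frac_part_addl ht_bs_mul ha_bs_mul.
rewrite Rmult_plus_distr_l -Rmult_assoc -powZ_add //.
have -> : (Int_part (th p) - (ht h1 + ht h2) + ht h1 = Int_part (th p) - ht h2)%Z by lia.
have -> : (Int_part (th p) - ht h2 - ht h1 = Int_part (th p) - (ht h1 + ht h2))%Z by lia.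
by f_equal; ring.
Qed.

Lemma tact_contraction h p q : tdist (tact h p) (tact h q) <= tdist p q.
Proof.
have [mp mq] := tmeet_ge p q; pose u := tmeet p q - IZR (ht h).
have fl_u : Int_part u = (Int_part (tmeet p q) - ht h)%Z by rewrite Int_part_subZ.
have Hm : tmerged (Int_part u) (tact h p) (tact h q).
  have := Int_part_le mp; have := Int_part_le mq => ? ?.
  rewrite /tmerged fl_u !tlift_tact; try lia.
  by rewrite Z.sub_add (tmerged_tmeet p q).
apply: Rle_trans (tdist_le (p := tact h p) (q := tact h q) _ _ Hm) _; rewrite ?th_tact /u; try lra.
by rewrite /tdist; lra.
Qed.

Lemma tact_isometric : isometric_action tdist (tact : BS n_gt0 -> _).
Proof. exact: isometric_action_of_contraction tact_one tact_mul tact_contraction. Qed.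

Lemma tact_cocompact : cocompact_action tdist (tact : BS n_gt0 -> _).
Proof.
exists tbase_segment; split; first exact: tbase_segment_compact.
move=> q; pose s := th q - IZR (Int_part (th q)).
have s01 : 0 <= s < 1 by have := Int_part_bounds (th q); rewrite /s; lra.
exists (mk_elt (- Int_part (th q)) (nadic_scale n_gt0 (- Int_part (th q)) (tr_nadic q))).
exists (tbase s); split; first by split; rewrite ?th_tbase //; lra.
apply: tpt_eq; first by rewrite th_tact th_tbase /s /ht /= opp_IZR; ring.
rewrite tr_tact th_tbase -(Int_part_spec s 0); last lra.
rewrite /ht /ha /= Rplus_0_l -Rmult_assoc -powZ_add // Z.add_opp_diag_l powZ0 Rmult_1_l.
exact: tr_frac.
Qed.

Lemma tree_model : hyperbolic_model tdist (tact : BS n_gt0 -> _).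
Proof.
exact: HyperbolicModel tdist_metric tdist_geodesic tdist_proper tdist_hyperbolic
  tdist_unbounded tact_isometric tact_cocompact.
Qed.

Lemma tact_displacement z r : exists K E : nat, forall h : bs_elt n,
  tdist z (tact h z) <= r ->
  (Z.abs (ht h) <= Z.of_nat K)%Z /\ is_int (ha h * INR n ^ E).
Proof.
have [e0 [c0 Hc0]] := tr_nadic z; pose J := Int_part (th z + r).
exists (Z.to_nat (up r)), (Z.to_nat (Z.abs (J + Z.of_nat e0))) => h zr; split.
  have := tdist_ge z (tact h z); rewrite th_tact.
  rewrite (_ : th z - (th z - IZR (ht h)) = IZR (ht h)) -?abs_IZR => [hr | ]; last ring.
  have [upr _] := archimed r; have /lt_IZR : IZR (Z.abs (ht h)) < IZR (up r) by lra.
  lia.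
have [Hm [_ hr]] := tball_meet zr; rewrite th_tact in hr.
have r0 := Rle_trans _ _ _ (metric_ge0 tdist_metric z (tact h z)) zr.
have fz : (Int_part (th z) <= J)%Z by apply: Int_part_le; lra.
have fzh : (Int_part (th z) - ht h <= J)%Z by rewrite -Int_part_subZ; apply: Int_part_le.
move: Hm; rewrite /tmerged tlift_tact // /tlift frac_part_addl => /esym /frac_part_eq [w Hw].
rewrite -/J in Hw; rewrite -powZ_nat in Hc0 *.
have HZ : is_int (ha h * powZ n (J + Z.of_nat e0)).
  have -> : ha h * powZ n (J + Z.of_nat e0) =
      (powZ n (J - Int_part (th z)) - powZ n (J + ht h - Int_part (th z))) * (tr z * powZ n (Z.of_nat e0))
      + IZR w * powZ n (Z.of_nat e0).
    by rewrite (powZ_add n_gt0) -Hw; ring.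
  rewrite Hc0; apply: is_int_add; apply: is_int_mul; try apply: is_int_IZR.
    by apply: is_int_sub; apply: is_int_powZ; lia.
  by apply: is_int_powZ; lia.
rewrite -powZ_nat; set E := Z.of_nat _.
have -> : E = ((E - (J + Z.of_nat e0)) + (J + Z.of_nat e0))%Z by lia.
rewrite (powZ_add n_gt0) (Rmult_comm (powZ n (E - _))) -Rmult_assoc.
by apply: is_int_mul => //; apply: is_int_powZ; rewrite /E; lia.
Qed.

End Tree.


Section Line.

Hypothesis one_gt0 : (0 < 1)%N.

Lemma tr_line (p : tpt 1) : tr p = 0.
Proof.
have [e He] := tr_nadic p; rewrite pow1 Rmult_1_r in He.
by rewrite -tr_frac; apply: frac_part_int.
Qed.

Lemma tdist_line p q : tdist one_gt0 p q = Rabs (th p - th q).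
Proof.
apply: Rle_antisym; last exact: tdist_ge.
by rewrite (tbase_tr0 (tr_line p)) (tbase_tr0 (tr_line q)); apply: tdist_tbase.
Qed.

(* For n = 1 the tree is a line, on which the a-coordinate acts by translation. *)
Definition tshift (h : bs_elt 1) (p : tpt 1) : tpt 1 := exist _ (th p + ha h, tr p) (proj2_sig p).

Lemma th_tshift h p : th (tshift h p) = th p + ha h.
Proof. by []. Qed.

Lemma tshift_isometric : isometric_action (tdist one_gt0) (tshift : BS one_gt0 -> _).
Proof.
apply: isometric_action_of_contraction => [p | h1 h2 p | h p q].
- by apply: tpt_eq => //; rewrite th_tshift ha_bs_one Rplus_0_r.
- by apply: tpt_eq => //; rewrite !th_tshift ha_bs_mul powZ_one; ring.
- by rewrite !tdist_line !th_tshift; apply: Req_le; f_equal; ring.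
Qed.

Lemma tshift_cocompact : cocompact_action (tdist one_gt0) (tshift : BS one_gt0 -> _).
Proof.
exists (tbase_segment (n := 1)); split; first exact: tbase_segment_compact.
move=> q; pose s := th q - IZR (Int_part (th q)).
exists (mk_elt 0 (nadic_IZR 1 (Int_part (th q)))), (tbase s).
split; first by split; rewrite ?th_tbase ?tr_tbase //; have := Int_part_bounds (th q); rewrite /s; lra.
by apply: tpt_eq; rewrite ?th_tshift ?th_tbase ?tr_line // /s /ha /=; ring.
Qed.

Lemma line_model : hyperbolic_model (tdist one_gt0) (tshift : BS one_gt0 -> _).
Proof.
exact: HyperbolicModel (tdist_metric _) (tdist_geodesic _) (tdist_proper _) (tdist_hyperbolic _)
  (tdist_unbounded _) tshift_isometric tshift_cocompact.
Qed.

Lemma tshift_displacement z r (h : bs_elt 1) :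
  tdist one_gt0 z (tshift h z) <= r -> Rabs (ha h) <= r.
Proof.
by rewrite tdist_line th_tshift (_ : _ - _ = - ha h) ?Rabs_Ropp //; ring.
Qed.

End Line.


Lemma exp_le {x y} : x <= y -> exp x <= exp y.
Proof. by case=> [/exp_increasing/Rlt_le | ->] //; apply: Rle_refl. Qed.

Lemma ln_le {x y} : 0 < x -> x <= y -> ln x <= ln y.
Proof. by move=> x0 [/(ln_increasing _ _ x0)/Rlt_le | ->] //; apply: Rle_refl. Qed.

Section Plane.

Implicit Types p q : R * R.

(* Length of the path from [p] vertically to height [u], then horizontally at height [u]
   (where horizontal lengths are scaled by 2 e^-u), then vertically down to [q]. *)
Definition pdist_at p q (u : R) : R :=
  Rabs (u - p.2) + Rabs (u - q.2) + 2 * Rabs (p.1 - q.1) * exp (- u).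

(* The optimal height: u -> 2 u + 2 D e^-u is minimal at u = ln D. *)
Definition pmeet p q : R :=
  if Rlt_dec 0 (Rabs (p.1 - q.1)) then Rmax (Rmax p.2 q.2) (ln (Rabs (p.1 - q.1)))
  else Rmax p.2 q.2.

Definition pdist p q : R := pdist_at p q (pmeet p q).

Lemma pmeet_ge p q : p.2 <= pmeet p q /\ q.2 <= pmeet p q.
Proof.
have := Rmax_l p.2 q.2; have := Rmax_r p.2 q.2.
by rewrite /pmeet; case: Rlt_dec => /= D0; have := Rmax_l (Rmax p.2 q.2) (ln (Rabs (p.1 - q.1))); lra.
Qed.

Lemma pmeet_exp p q : Rabs (p.1 - q.1) <= exp (pmeet p q).
Proof.
rewrite /pmeet; case: Rlt_dec => /= D0; last by have := exp_pos (Rmax p.2 q.2); lra.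
by rewrite -{1}(exp_ln _ D0); apply/exp_le/Rmax_r.
Qed.

Lemma pdistE p q :
  pdist p q = 2 * pmeet p q - p.2 - q.2 + 2 * Rabs (p.1 - q.1) * exp (- pmeet p q).
Proof.
have [? ?] := pmeet_ge p q; rewrite /pdist /pdist_at.
by rewrite (Rabs_right (pmeet p q - p.2)) ?(Rabs_right (pmeet p q - q.2)); lra.
Qed.

Lemma pmeet_exp_le1 p q : Rabs (p.1 - q.1) * exp (- pmeet p q) <= 1.
Proof.
rewrite exp_Ropp; have := pmeet_exp p q; have := exp_pos (pmeet p q) => e0 De.
by apply: (Rmult_le_reg_r (exp (pmeet p q))) => //; rewrite Rmult_assoc Rinv_l; lra.
Qed.

Lemma pmeet_optimal {p q w} : Rmax p.2 q.2 <= w ->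
  2 * pmeet p q + 2 * Rabs (p.1 - q.1) * exp (- pmeet p q) <=
  2 * w + 2 * Rabs (p.1 - q.1) * exp (- w).
Proof.
set m := Rmax p.2 q.2; set D := Rabs (p.1 - q.1) => mw.
have ew : 1 + (- w + ln D) <= exp (- w + ln D) by apply: exp_ineq1_le.
rewrite /pmeet -/m -/D; case: Rlt_dec => /= D0; last first.
  by rewrite (_ : D = 0); [lra | have := Rabs_pos (p.1 - q.1); rewrite -/D; lra].
case: (Rle_dec m (ln D)) => mD.
  rewrite Rmax_right // exp_Ropp exp_ln // Rmult_assoc Rinv_r; last lra.
  by rewrite exp_plus exp_ln // in ew; nra.
rewrite Rmax_left; last lra.
have Dm : D * exp (- m) < 1.
  rewrite exp_Ropp -(exp_ln D D0); apply: (Rmult_lt_reg_r (exp m)); first exact: exp_pos.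
  by rewrite Rmult_assoc Rinv_l ?Rmult_1_l ?Rmult_1_r; [apply: exp_increasing; lra | have := exp_pos m; lra].
have a0 : 0 <= D * exp (- m) by apply: Rmult_le_pos; [lra | apply/Rlt_le/exp_pos].
have ey := exp_ineq1_le (- (w - m)).
have key : D * exp (- m) * (1 - exp (- (w - m))) <= w - m.
  by case: (Rle_dec (exp (- (w - m))) 1) => y1; nra.
have -> : exp (- w) = exp (- m) * exp (- (w - m)) by rewrite -exp_plus; f_equal; ring.
nra.
Qed.

Lemma pdist_le_at p q u : pdist p q <= pdist_at p q u.
Proof.
have mp := Rmax_l p.2 q.2; have mq := Rmax_r p.2 q.2; have D0 := Rabs_pos (p.1 - q.1).
rewrite pdistE /pdist_at; case: (Rle_dec (Rmax p.2 q.2) u) => mu.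
  have := pmeet_optimal (p := p) (q := q) mu.
  by rewrite (Rabs_right (u - p.2)) ?(Rabs_right (u - q.2)); lra.
have := pmeet_optimal (p := p) (q := q) (Rle_refl _).
have : Rabs (p.1 - q.1) * exp (- Rmax p.2 q.2) <= Rabs (p.1 - q.1) * exp (- u).
  by apply: Rmult_le_compat_l => //; apply: exp_le; lra.
have : 2 * Rmax p.2 q.2 - p.2 - q.2 <= Rabs (u - p.2) + Rabs (u - q.2).
  by rewrite /Rmax; case: Rle_dec; rewrite /Rabs; repeat case: Rcase_abs; lra.
lra.
Qed.

Lemma pdist_at_triangle p q r u1 u2 :
  pdist_at p r (Rmax u1 u2) <= pdist_at p q u1 + pdist_at q r u2.
Proof.
rewrite /pdist_at; have := Rabs_triang (p.1 - q.1) (q.1 - r.1).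
rewrite (_ : p.1 - q.1 + (q.1 - r.1) = p.1 - r.1); last ring.
have := Rabs_pos (p.1 - q.1); have := Rabs_pos (q.1 - r.1).
have := exp_pos (- u1); have := exp_pos (- u2).
rewrite /Rmax; case: Rle_dec => u12.
  have : exp (- u2) <= exp (- u1) by apply: exp_le; lra.
  by rewrite /Rabs; repeat case: Rcase_abs; nra.
have : exp (- u1) <= exp (- u2) by apply: exp_le; lra.
by rewrite /Rabs; repeat case: Rcase_abs; nra.
Qed.

Lemma pdist_ge p q : Rabs (p.2 - q.2) + 2 * Rabs (p.1 - q.1) * exp (- pmeet p q) <= pdist p q.
Proof.
have [? ?] := pmeet_ge p q; rewrite pdistE.
by rewrite /Rabs; case: Rcase_abs; lra.
Qed.

Lemma pmeet_sym p q : pmeet p q = pmeet q p.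
Proof. by rewrite /pmeet Rabs_minus_sym (Rmax_comm p.2). Qed.

Lemma pdist_at_sym p q u : pdist_at p q u = pdist_at q p u.
Proof. by rewrite /pdist_at (Rabs_minus_sym p.1); ring. Qed.

Lemma pdist_metric : is_metric pdist.
Proof.
split; [|split] => [p q | p q | p q r].
- split=> [d0 | <-].
    have := pdist_ge p q; rewrite d0; have := Rabs_pos (p.2 - q.2).
    have := Rabs_pos (p.1 - q.1); have := exp_pos (- pmeet p q) => ? ? ? ?.
    have e1 : p.1 = q.1.
      have : Rabs (p.1 - q.1) <= 0 by nra.
      by rewrite /Rabs; case: Rcase_abs; lra.
    have e2 : p.2 = q.2.
      have : Rabs (p.2 - q.2) <= 0 by nra.
      by rewrite /Rabs; case: Rcase_abs; lra.
    by rewrite (surjective_pairing p) (surjective_pairing q) e1 e2.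
  apply: Rle_antisym; last by have := pdist_ge p p; have := Rabs_pos (p.2 - p.2);
    have := Rmult_le_pos _ _ (Rabs_pos (p.1 - p.1)) (Rlt_le _ _ (exp_pos (- pmeet p p))); lra.
  by apply: Rle_trans (pdist_le_at p p p.2) _; rewrite /pdist_at !Rminus_diag Rabs_R0; lra.
- by rewrite /pdist pmeet_sym pdist_at_sym.
- by apply: Rle_trans (pdist_le_at p r (Rmax (pmeet p q) (pmeet q r))) _; apply: pdist_at_triangle.
Qed.

Lemma pmeet_quasi_ultra p q r : pmeet p r <= Rmax (pmeet p q) (pmeet q r) + ln 2.
Proof.
set M := Rmax (pmeet p q) (pmeet q r).
have pqM : pmeet p q <= M by apply: Rmax_l.
have qrM : pmeet q r <= M by apply: Rmax_r.
have [? ?] := pmeet_ge p q; have [? ?] := pmeet_ge q r.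
have ln2 : 0 < ln 2 by rewrite -ln_1; apply: ln_increasing; lra.
rewrite {1}/pmeet; case: Rlt_dec => /= D0; last by apply: Rmax_lub; lra.
apply: Rmax_lub; first by apply: Rmax_lub; lra.
have DM : Rabs (p.1 - r.1) <= 2 * exp M.
  have := Rabs_triang (p.1 - q.1) (q.1 - r.1).
  rewrite (_ : p.1 - q.1 + (q.1 - r.1) = p.1 - r.1); last ring.
  have := pmeet_exp p q; have := pmeet_exp q r; have := exp_le pqM; have := exp_le qrM; lra.
have := ln_le D0 DM; rewrite ln_mult ?ln_exp; [lra | lra | exact: exp_pos].
Qed.

Lemma pdist_hyperbolic : gromov_hyperbolic pdist.
Proof.
have ln2 : 0 <= ln 2 by rewrite -ln_1; apply: ln_le; lra.
apply: (gromov_hyperbolic_of_quasi_ultrametric pdist pmeet snd (ln 2) ln2 pmeet_sym) => [p q r | p q].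
  exact: pmeet_quasi_ultra.
have := pmeet_exp_le1 p q; have := Rmult_le_pos _ _ (Rabs_pos (p.1 - q.1)) (Rlt_le _ _ (exp_pos (- pmeet p q))).
by rewrite pdistE; lra.
Qed.


Lemma pdist_vertical x s1 s2 : pdist (x, s1) (x, s2) <= Rabs (s1 - s2).
Proof.
apply: Rle_trans (pdist_le_at _ _ (Rmax s1 s2)) _.
rewrite /pdist_at /= Rminus_diag Rabs_R0 Rmult_0_r Rmult_0_l Rplus_0_r.
by rewrite /Rmax; case: Rle_dec => ?; rewrite /Rabs; repeat case: Rcase_abs; lra.
Qed.

Lemma pdist_horizontal x1 x2 u : pdist (x1, u) (x2, u) <= 2 * Rabs (x1 - x2) * exp (- u).
Proof.
by apply: Rle_trans (pdist_le_at _ _ u) _; rewrite /pdist_at /= Rminus_diag Rabs_R0; lra.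
Qed.

(* Geodesics go up, across at height [pmeet p q], and down. *)
Lemma pdist_geodesic : geodesic_space pdist.
Proof.
apply: (geodesic_of_lipschitz_paths pdist_metric) => p q.
have [pu qu] := pmeet_ge p q; set u := pmeet p q in pu qu *.
set L1 := u - p.2; set L2 := 2 * Rabs (p.1 - q.1) * exp (- u); have eu := exp_pos (- u).
have L2_0 : 0 <= L2 by have := Rabs_pos (p.1 - q.1); rewrite /L2; nra.
have L1_0 : 0 <= L1 by rewrite /L1; lra.
have dE : pdist p q = L1 + L2 + (u - q.2) by rewrite pdistE /L1 /L2 -/u; ring.
pose v := (q.1 - p.1) / L2.
pose g1 s := (p.1, p.2 + s); pose g2 s := (p.1 + (s - L1) * v, u).
pose g3 s := (q.1, q.2 + pdist p q - s).
have speed : 2 * Rabs v * exp (- u) <= 1.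
  case: L2_0 => [L2_pos | L2_0]; last by rewrite /v -L2_0 /Rdiv Rinv_0 Rmult_0_r Rabs_R0; lra.
  rewrite /v /Rdiv Rabs_mult Rabs_inv (Rabs_pos_eq L2) ?(Rabs_minus_sym q.1); last lra.
  have D0 : Rabs (p.1 - q.1) <> 0 by move=> D0; move: L2_pos; rewrite /L2 D0; lra.
  by apply: Req_le; rewrite /L2; field; split=> //; lra.
have g12 : g1 L1 = g2 L1 by rewrite /g1 /g2 /L1; f_equal; ring.
have g23 : g2 (L1 + L2) = g3 (L1 + L2).
  rewrite /g2 /g3 dE; f_equal; last ring.
  case: L2_0 => [L2_pos | L2_0]; first by rewrite /v; field; lra.
  have : Rabs (p.1 - q.1) = 0 by move: L2_0; rewrite /L2; nra.
  by rewrite /Rabs; case: Rcase_abs => _ D0; rewrite -L2_0; lra.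
have g123 : path_concat g1 g2 L1 (L1 + L2) = g3 (L1 + L2).
  by rewrite (path_concat_r g12) //; lra.
exists (path_concat (path_concat g1 g2 L1) g3 (L1 + L2)); split; [|split].
- rewrite !path_concat_l ?/g1 ?Rplus_0_r; try lra.
  exact/esym/surjective_pairing.
- rewrite (path_concat_r g123) /g3; last lra.
  by rewrite Rplus_minus_r -surjective_pairing.
apply: (lipschitz_on_concat pdist_metric g123); first apply: (lipschitz_on_concat pdist_metric g12).
- move=> s t _ st _; apply: Rle_trans (pdist_vertical _ _ _) _.
  by rewrite Rabs_left1; lra.
- move=> s t _ st _; apply: Rle_trans (pdist_horizontal _ _ _) _.
  rewrite (_ : _ - _ = (s - t) * v); last ring.
  by rewrite Rabs_mult Rabs_left1; [nra | lra].
- move=> s t _ st _; apply: Rle_trans (pdist_vertical _ _ _) _.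
  by rewrite Rabs_right; lra.
Qed.


Lemma pdist_ball {p q r} : pdist p q <= r ->
  Rabs (p.1 - q.1) <= r * exp (p.2 + r) / 2 /\ Rabs (p.2 - q.2) <= r.
Proof.
move=> pqr; have [pu qu] := pmeet_ge p q; have := pdist_ge p q.
have e0 := exp_pos (- pmeet p q); have D0 := Rabs_pos (p.1 - q.1); have := Rabs_pos (p.2 - q.2).
move=> ? ?; split; last nra.
have ur : pmeet p q <= p.2 + r by move: pqr; rewrite pdistE; nra.
have a_r : 2 * (Rabs (p.1 - q.1) * exp (- pmeet p q)) <= r by move: pqr; rewrite pdistE; lra.
have -> : Rabs (p.1 - q.1) = Rabs (p.1 - q.1) * exp (- pmeet p q) * exp (pmeet p q).
  by rewrite Rmult_assoc -exp_plus Rplus_opp_l exp_0 Rmult_1_r.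
have := exp_le ur; have := exp_pos (pmeet p q); nra.
Qed.

Lemma pdist_le_coords x s l1 l2 :
  pdist (x, s) (l1, l2) <= Rabs (s - l2) + 2 * exp (- l2) * Rabs (x - l1).
Proof.
apply: Rle_trans (pdist_le_at _ _ l2) _.
by rewrite /pdist_at /= Rminus_diag Rabs_R0 Rabs_minus_sym; lra.
Qed.

Lemma box_subseq {u : nat -> R * R} {a1 b1 a2 b2} :
  (forall k, a1 <= (u k).1 <= b1 /\ a2 <= (u k).2 <= b2) ->
  exists phi, strictly_increasing phi /\ exists L : R * R,
    (a1 <= L.1 <= b1 /\ a2 <= L.2 <= b2) /\ seq_cv pdist (u \o phi) L.
Proof.
move=> ub.
have [phi1 [phi1I [l1 [l1b cv1]]]] := bolzano_weierstrass_subseq (fun k => proj1 (ub k)).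
have [phi2 [phi2I [l2 [l2b cv2]]]] :=
  bolzano_weierstrass_subseq (fun k => proj2 (ub (phi1 k))).
exists (phi1 \o phi2); split; first exact: strictly_increasing_comp.
exists (l1, l2); split=> //.
have cv := CV_plus _ _ _ _ (Un_cv_dist cv2)
  (CV_mult _ _ _ _ (Un_cv_const (2 * exp (- l2))) (Un_cv_dist (Un_cv_subseq phi2I cv1))).
rewrite Rmult_0_r Rplus_0_r in cv.
apply: seq_cv_of_dist_le cv _ => k /=.
by rewrite [u _]surjective_pairing; apply: pdist_le_coords.
Qed.

Lemma pdist_proper : proper_space pdist.
Proof.
move=> p r u ur; pose B := r * exp (p.2 + r) / 2.
have [phi [phiI [L [_ cvL]]]] : exists phi, strictly_increasing phi /\ exists L : R * R,
    (p.1 - B <= L.1 <= p.1 + B /\ p.2 - r <= L.2 <= p.2 + r) /\ seq_cv pdist (u \o phi) L.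
  apply: box_subseq => k; have [D1 D2] := pdist_ball (ur k).
  by split; apply: Rabs_le_between; rewrite Rabs_minus_sym.
exists phi; split=> //; exists L; split=> //.
by apply: ball_closed pdist_metric cvL _ => k; apply: ur.
Qed.

Lemma pdist_unbounded : unbounded pdist.
Proof.
move=> r; exists (0, 0), (0, Rabs r + 1); apply: Rlt_le_trans (pdist_ge _ _).
have := Rabs_pos r; have := Rle_abs r => ? ?.
by rewrite /= Rminus_diag Rabs_R0 (Rabs_left1 (0 - _)); lra.
Qed.

End Plane.

Section PlaneAction.

Context {n : nat}.
Hypothesis n_gt0 : (0 < n)%N.

(* (k, b) acts as the affine map x |-> n^k x + b, which is an isometry once the height
   is shifted by ln (n^k). *)
Definition pact (h : bs_elt n) (p : R * R) : R * R :=
  (powZ n (ht h) * p.1 + ha h, p.2 + ln (powZ n (ht h))).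

Lemma pdist_at_pact h p q u :
  pdist_at (pact h p) (pact h q) (u + ln (powZ n (ht h))) = pdist_at p q u.
Proof.
have lam0 := powZ_gt0 n_gt0 (ht h).
rewrite /pdist_at /= Ropp_plus_distr exp_plus (exp_Ropp (ln _)) exp_ln //.
rewrite (_ : _ * p.1 + _ - _ = powZ n (ht h) * (p.1 - q.1)); last ring.
have E s : u + ln (powZ n (ht h)) - (s + ln (powZ n (ht h))) = u - s by ring.
by rewrite Rabs_mult (Rabs_pos_eq (powZ _ _)) ?E; [field | ]; lra.
Qed.

Lemma pact_isometric : isometric_action pdist (pact : BS n_gt0 -> _).
Proof.
apply: isometric_action_of_contraction => [p | h1 h2 p | h p q].
- by rewrite /pact ht_bs_one ha_bs_one powZ0 ln_1 Rmult_1_l Rplus_0_r Rplus_0_r -surjective_pairing.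
- rewrite /pact ht_bs_mul ha_bs_mul powZ_add // ln_mult; try exact: powZ_gt0.
  by f_equal; rewrite /=; ring.
- apply: Rle_trans (pdist_le_at _ _ (pmeet p q + ln (powZ n (ht h)))) _.
  by rewrite pdist_at_pact; apply: Rle_refl.
Qed.

Lemma pact_cocompact : (1 < n)%N -> cocompact_action pdist (pact : BS n_gt0 -> _).
Proof.
move=> n_gt1; have ln_n : 0 < ln (INR n) by rewrite -ln_1; apply: ln_increasing; [lra | apply: (lt_INR 1); lia].
exists (fun p => 0 <= p.1 <= 1 /\ 0 <= p.2 <= ln (INR n)); split.
  move=> u ub; have [phi [phiI [L [LK cvL]]]] := box_subseq ub.
  by exists phi; split=> //; exists L.
move=> [x s]; pose k := Int_part (s / ln (INR n)); pose m := Int_part (x / powZ n k).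
have lam0 := powZ_gt0 n_gt0 k.
exists (mk_elt k (nadic_scale n_gt0 k (nadic_IZR n m))), (x / powZ n k - IZR m, s - IZR k * ln (INR n)).
split.
  have [m1 m2] : IZR m <= x / powZ n k < IZR m + 1 := Int_part_bounds _.
  have [k1 k2] : IZR k <= s / ln (INR n) < IZR k + 1 := Int_part_bounds _.
  have sE : s = s / ln (INR n) * ln (INR n) by field; lra.
  by split=> /=; [split; lra | rewrite {1}sE; split; nra].
rewrite /pact ht_mk ha_mk ln_powZ //=; f_equal; [field | ring]; lra.
Qed.

Lemma plane_model : (1 < n)%N -> hyperbolic_model pdist (pact : BS n_gt0 -> _).
Proof.
move=> n_gt1.
exact: HyperbolicModel pdist_metric pdist_geodesic pdist_proper pdist_hyperbolic
  pdist_unbounded pact_isometric (pact_cocompact n_gt1).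
Qed.

Lemma pact_displacement z r (K : nat) : exists C : R, forall h : bs_elt n,
  (Z.abs (ht h) <= Z.of_nat K)%Z -> pdist z (pact h z) <= r -> Rabs (ha h) <= C.
Proof.
exists (r * exp (z.2 + r) / 2 + (powZ n (Z.of_nat K) + 1) * Rabs z.1) => h hK /pdist_ball [hz _].
set lam := powZ n (ht h) in hz *; have lam0 : 0 < lam by apply: powZ_gt0.
have lamK : lam <= powZ n (Z.of_nat K) by apply: powZ_le => //; lia.
rewrite /pact /= -/lam Rabs_minus_sym in hz.
have -> : ha h = (lam * z.1 + ha h - z.1) + (1 - lam) * z.1 by ring.
apply: Rle_trans (Rabs_triang _ _) _; rewrite Rabs_mult.
have : Rabs (1 - lam) <= powZ n (Z.of_nat K) + 1 by apply: Rabs_le; lra.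
by have := Rabs_pos z.1; have := Rabs_pos (1 - lam); nra.
Qed.

End PlaneAction.


Lemma PPH_of_bs_models {n : nat} (n_gt0 : (0 < n)%N) {G : group} {a t : G} {A B : Type}
    {dA : A -> A -> R} {dB : B -> B -> R}
    {actA : bs_elt n -> A -> A} {actB : bs_elt n -> B -> B} :
  is_BS1n n a t ->
  hyperbolic_model dA (actA : BS n_gt0 -> _) -> hyperbolic_model dB (actB : BS n_gt0 -> _) ->
  (forall zA zB r, exists (K E : nat) (C : R), forall h : bs_elt n,
     dA zA (actA h zA) <= r -> dB zB (actB h zB) <= r ->
     [/\ (Z.abs (ht h) <= Z.of_nat K)%Z, is_int (ha h * INR n ^ E) & Rabs (ha h) <= C]) ->
  PPH G.
Proof.
move=> [bs [gen univ]] modA modB bounded.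
have [f [f_hom [fa ft]]] := univ (BS n_gt0) bs_a bs_t (bs_rel_model n_gt0).
have f_surj := iso_surjective n_gt0 f_hom fa ft.
apply: (PPH_of_two_models (hyperbolic_model_comp _ _ f_hom f_surj modA)
                          (hyperbolic_model_comp _ _ f_hom f_surj modB)) => zA zB r.
have [K [E [C HC]]] := bounded zA zB r.
have [s Hs] := iso_finite_box n_gt0 bs gen f_hom fa ft K E C.
exists s => g Hg; have := metric_ge0 (model_metric _ _ modA) zA (actA (f g) zA).
have := metric_ge0 (model_metric _ _ modB) zB (actB (f g) zB) => ? ?.
by have [? ? ?] := HC (f g) ltac:(lra) ltac:(lra); apply: Hs.
Qed.

Theorem lemma3p11 : forall (n : nat), (1 <= n)%nat ->
  forall (G : group) (a t : G), is_BS1n n a t -> PPH G.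
Proof.
move=> n n_gt0 G a t bsG; case: (ltngtP n 1) => [n_lt1 | n_gt1 | n1]; first lia.
  apply: (PPH_of_bs_models n_gt0 bsG (plane_model n_gt0 n_gt1) (tree_model n_gt0)) => zA zB r.
  have [K [E HKE]] := tact_displacement n_gt0 zB r; have [C HC] := pact_displacement n_gt0 zA r K.
  exists K, E, C => h hA hB; have [hK hE] := HKE h hB.
  by split=> //; apply: HC.
subst n; apply: (PPH_of_bs_models n_gt0 bsG (line_model n_gt0) (tree_model n_gt0)) => zA zB r.
have [K [E HKE]] := tact_displacement n_gt0 zB r.
exists K, E, r => h hA hB; have [hK hE] := HKE h hB.
by split=> //; apply: tshift_displacement hA.
Qed.
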